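(* Let $A\in\mathbb{R}^{n\times n}$ be Metzler, $J\in\mathbb{R}^{n\times n}$ be nonnegative and $\bar T>0$. The following statements are equivalent: (a) There exist $\lambda,\mu,\nu\in\mathbb{R}^n_{>0}$ such that $\lambda^\top Ax\le-\mu^\top x$ for all $x\in\mathbb{R}^n_{\ge0}$ and $\lambda^\top Je^{A\theta}x-\lambda^\top x\le-\nu^\top x$ for all $x\in\mathbb{R}^n_{\ge0}$ and all $\theta\ge\bar T$. (b) There exists $\lambda\in\mathbb{R}^n_{>0}$ such that $\lambda^\top A<0$ and $\lambda^\top Je^{A\theta}-\lambda^\top<0$ for all $\theta\ge\bar T$. (c) There exists $\lambda\in\mathbb{R}^n_{>0}$ such that $\lambda^\top A<0$ and $\lambda^\top Je^{A\bar T}-\lambda^\top<0$. (d) There exists $\lambda\in\mathbb{R}^n_{>0}$ with $\lambda^\top A<0$ and $\lambda^\top(Je^{A\bar T}-I_n)<0$ (a common linear copositive Lyapunov function for the pair $(A,Je^{A\bar T}-I_n)$). (e) $\ker\begin{bmatrix} I_n & -A & -(Je^{A\bar T}-I_n)\end{bmatrix}\cap\mathbb{R}^{3n}_{\ge0}=\{0\}$. (f) There exist a differentiable $\zeta:[0,\bar T]\to\mathbb{R}^n$ with $\zeta(\bar T)\in\mathbb{R}^n_{>0}$ and $\varepsilon>0$ such that $\zeta(\bar T)^\top A<0$, $\zeta(\tau)^\top A-\dot\zeta(\tau)^\top\le0$ for all $\tau\in[0,\bar T]$, and $\zeta(\bar T)^\top J-\zeta(0)^\top+\varepsilon\mathbf{1}_n^\top\le0$.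 (g) There exist a differentiable $\xi:[0,\bar T]\to\mathbb{R}^n$ with $\xi(0)\in\mathbb{R}^n_{>0}$ and $\varepsilon>0$ such that $\xi(0)^\top A<0$, $\xi(\tau)^\top A+\dot\xi(\tau)^\top\le0$ for all $\tau\in[0,\bar T]$, and $\xi(0)^\top J-\xi(\bar T)^\top+\varepsilon\mathbf{1}_n^\top\le0$. Moreover, if one of these statements holds, the impulsive system is asymptotically stable under minimum dwell-time $\bar T$.
   Context: Consider the linear impulsive system $\dot x(t)=Ax(t)$ for $t\neq t_k$, $x(t_k^+)=Jx(t_k)$, $x(t_0)=x_0$, where $x(t)\in\mathbb{R}^n$, $x(t^+):=\lim_{s\downarrow t}x(s)$, and the impulse times $\{t_k\}_{k\in\mathbb{N}}$ are strictly increasing with $t_k\to\infty$; $T_k:=t_{k+1}-t_k$. A matrix is Metzler if its off-diagonal entries are nonnegative and nonnegative if all entries are nonnegative. Vector inequalities are componentwise; $\mathbf{1}_n$ is the vector of ones. ''Asymptotically stable under minimum dwell-time $\bar T$'' means the zero solution is globally asymptotically stable for every impulse sequence with $\bar T\le T_k<\infty$ for all $k$. *)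

From Stdlib Require Import Reals Lra Arith ClassicalEpsilon.
Open Scope R_scope.

(* Vectors in R^n and n x n matrices are represented by functions on indices;
   only indices < n are meaningful. *)
Definition vec := nat -> R.
Definition mat := nat -> nat -> R.

Fixpoint rsum (m : nat) (f : nat -> R) : R :=
  match m with O => 0 | S k => rsum k f + f k end.

Definition ident : mat := fun i j => if Nat.eqb i j then 1 else 0.
Definition mmul (n : nat) (A B : mat) : mat :=
  fun i j => rsum n (fun k => A i k * B k j).
Definition msub (A B : mat) : mat := fun i j => A i j - B i j.
Fixpoint mpow (n : nat) (A : mat) (k : nat) : mat :=
  match k with O => ident | S k' => mmul n A (mpow n A k') end.

Definition mv (n : nat) (A : mat) (x : vec) : vec :=
  fun i => rsum n (fun j => A i j * x j).
Definition vm (n : nat) (l : vec) (A : mat) : vec :=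
  fun j => rsum n (fun i => l i * A i j).
Definition dot (n : nat) (l x : vec) : R := rsum n (fun i => l i * x i).
Definition vnorm (n : nat) (x : vec) : R := rsum n (fun i => Rabs (x i)).

Definition vpos (n : nat) (v : vec) : Prop := forall i, (i < n)%nat -> 0 < v i.
Definition vnonneg (n : nat) (v : vec) : Prop := forall i, (i < n)%nat -> 0 <= v i.
Definition vneg (n : nat) (v : vec) : Prop := forall i, (i < n)%nat -> v i < 0.
Definition vnonpos (n : nat) (v : vec) : Prop := forall i, (i < n)%nat -> v i <= 0.

Definition Metzler (n : nat) (A : mat) : Prop :=
  forall i j, (i < n)%nat -> (j < n)%nat -> i <> j -> 0 <= A i j.
Definition nonneg_mat (n : nat) (J : mat) : Prop :=
  forall i j, (i < n)%nat -> (j < n)%nat -> 0 <= J i j.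

(* Matrix exponential e^{A t} = sum_k t^k/k! A^k (entrywise limit of the
   partial sums; the series always converges, so this picks its sum). *)
Definition mexp_partial (n : nat) (A : mat) (t : R) (i j : nat) (N : nat) : R :=
  sum_f_R0 (fun k => t ^ k / INR (Factorial.fact k) * mpow n A k i j) N.
Definition mexp (n : nat) (A : mat) (t : R) : mat :=
  fun i j => epsilon (inhabits 0) (fun l => Un_cv (mexp_partial n A t i j) l).

(* f' is the derivative of f on [a,b] (one-sided at the endpoints). *)
Definition has_deriv_on (a b : R) (f f' : R -> R) : Prop :=
  forall tau, a <= tau <= b ->
  forall eps, 0 < eps -> exists delta, 0 < delta /\
    forall s, a <= s <= b -> 0 < Rabs (s - tau) < delta ->
      Rabs ((f s - f tau) / (s - tau) - f' tau) < eps.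

Definition vdiff_on (n : nat) (a b : R) (z dz : R -> vec) : Prop :=
  forall i, (i < n)%nat -> has_deriv_on a b (fun s => z s i) (fun s => dz s i).

Definition admissible (Tbar : R) (t : nat -> R) : Prop :=
  (forall k, t k < t (S k)) /\ cv_infty t /\ (forall k, Tbar <= t (S k) - t k).

(* x is the solution on [t_0, oo) of  xdot = A x (t <> t_k),
   x(t_k^+) = J x(t_k) (k >= 1),  x(t_0) = x0; x is left-continuous at
   impulse times, i.e. x(t_k) is the pre-jump value. *)
Definition is_solution (n : nat) (A J : mat) (t : nat -> R) (x0 : vec)
  (x : R -> vec) : Prop :=
  (forall i, (i < n)%nat -> x (t O) i = x0 i) /\
  (forall k tau, t k < tau <= t (S k) ->
     forall i, (i < n)%nat ->
       x tau i = mv n (mexp n A (tau - t k))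
                   (match k with O => x0 | S _ => mv n J (x (t k)) end) i).

Definition GAS_seq (n : nat) (A J : mat) (t : nat -> R) : Prop :=
  (forall eps, 0 < eps -> exists delta, 0 < delta /\
     forall x0 x, is_solution n A J t x0 x -> vnorm n x0 < delta ->
       forall tau, t O <= tau -> vnorm n (x tau) < eps) /\
  (forall x0 x, is_solution n A J t x0 x ->
     forall eps, 0 < eps -> exists T, forall tau, T <= tau ->
       vnorm n (x tau) < eps).

Definition AS_min_dwell (n : nat) (A J : mat) (Tbar : R) : Prop :=
  forall t, admissible Tbar t -> GAS_seq n A J t.

(* The n x 3n matrix [ I_n  -A  -(M)] with M = J e^{A Tbar} - I_n. *)
Definition blockK (n : nat) (A M : mat) : mat :=
  fun i j => if Nat.ltb j n then ident i j
             else if Nat.ltb j (2 * n)%nat then - A i (j - n)%nat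
             else - M i (j - 2 * n)%nat.

(* For a Metzler matrix [A], [e^{At}] is entrywise nonnegative with a positive
   diagonal (shift [A] by a multiple of [I] to make it nonnegative), so any row vector [lam]
   with [lam^T A <= 0] satisfies [lam^T e^{As} <= lam^T] for [s >= 0]. Hence a strict decrease
   [lam^T J e^{A Tbar} < lam^T] propagates to every [theta >= Tbar] with a uniform factor
   [1 - c]; this gives (c) => (a), and makes the weighted l1-norm [lam^T |x|] nonincreasing
   along the flow and contracted by [1 - c] at each jump, whence stability.
   (d) <=> (e) is Gordan's theorem of the alternative, proved by Fourier-Motzkin elimination.
   For (f) => (c), [tau |-> zeta(tau)^T e^{A (Tbar - tau)}] is nondecreasing, so [lam = zeta Tbar]
   works; conversely an explicit [zeta] is built from [lam]. (g) is (f) run backwards in time. *)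

From Stdlib Require Import Reals Lra Lia List ClassicalEpsilon.
From Coquelicot Require Import Coquelicot.
Import ListNotations.
Open Scope R_scope.

Lemma rsum_ext m f g : (forall i, (i < m)%nat -> f i = g i) -> rsum m f = rsum m g.
Proof.
  induction m as [|m IH]; intros H; simpl; auto.
  rewrite IH by (intros; apply H; lia). now rewrite H by lia.
Qed.

Lemma rsum_plus m f g : rsum m (fun i => f i + g i) = rsum m f + rsum m g.
Proof. induction m as [|m IH]; simpl; [lra|]. rewrite IH. lra. Qed.

Lemma rsum_minus m f g : rsum m (fun i => f i - g i) = rsum m f - rsum m g.
Proof. induction m as [|m IH]; simpl; [lra|]. rewrite IH. lra. Qed.

Lemma rsum_opp m f : rsum m (fun i => - f i) = - rsum m f.
Proof. induction m as [|m IH]; simpl; [lra|]. rewrite IH. lra. Qed.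

Lemma rsum_scal_l m c f : rsum m (fun i => c * f i) = c * rsum m f.
Proof. induction m as [|m IH]; simpl; [lra|]. rewrite IH. lra. Qed.

Lemma rsum_scal_r m c f : rsum m (fun i => f i * c) = rsum m f * c.
Proof. induction m as [|m IH]; simpl; [lra|]. rewrite IH. lra. Qed.

Lemma rsum_const0 m : rsum m (fun _ => 0) = 0.
Proof. induction m as [|m IH]; simpl; [lra|]. rewrite IH. lra. Qed.

Lemma rsum_swap m k (f : nat -> nat -> R) :
  rsum m (fun i => rsum k (fun j => f i j)) = rsum k (fun j => rsum m (fun i => f i j)).
Proof.
  induction m as [|m IH]; simpl; [now rewrite rsum_const0|].
  now rewrite IH, <- rsum_plus.
Qed.

Lemma rsum_le m f g : (forall i, (i < m)%nat -> f i <= g i) -> rsum m f <= rsum m g.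
Proof.
  induction m as [|m IH]; intros H; simpl; [lra|].
  specialize (H m (Nat.lt_succ_diag_r m)) as Hm.
  enough (rsum m f <= rsum m g) by lra. apply IH. intros; apply H; lia.
Qed.

Lemma rsum_nonneg m f : (forall i, (i < m)%nat -> 0 <= f i) -> 0 <= rsum m f.
Proof. intros H. rewrite <- (rsum_const0 m). now apply rsum_le. Qed.

Lemma rsum_ge_term m f i :
  (forall i, (i < m)%nat -> 0 <= f i) -> (i < m)%nat -> f i <= rsum m f.
Proof.
  induction m as [|m IH]; intros H Hi; [lia|]. simpl.
  assert (Hf : forall k, (k < m)%nat -> 0 <= f k) by (intros; apply H; lia).
  destruct (Nat.eq_dec i m) as [->|Hne].
  - pose proof (rsum_nonneg m f Hf). lra.
  - pose proof (IH Hf ltac:(lia)). pose proof (H m ltac:(lia)). lra.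
Qed.

Lemma rsum_abs m f : Rabs (rsum m f) <= rsum m (fun i => Rabs (f i)).
Proof.
  induction m as [|m IH]; simpl; [rewrite Rabs_R0; lra|].
  eapply Rle_trans; [apply Rabs_triang|lra].
Qed.

Lemma rsum_ident_r m i (x : nat -> R) : (i < m)%nat ->
  rsum m (fun j => ident i j * x j) = x i.
Proof.
  induction m as [|m IH]; intros Hi; [lia|]. simpl. unfold ident at 2.
  destruct (Nat.eq_dec i m) as [->|Hne].
  - rewrite Nat.eqb_refl, (rsum_ext m _ (fun _ => 0)), rsum_const0; [lra|].
    intros j Hj. unfold ident. replace (Nat.eqb m j) with false; [lra|].
    symmetry. apply Nat.eqb_neq. lia.
  - rewrite IH by lia. replace (Nat.eqb i m) with false; [lra|].
    symmetry. now apply Nat.eqb_neq.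
Qed.

Lemma rsum_ident_l m j (x : nat -> R) : (j < m)%nat ->
  rsum m (fun i => x i * ident i j) = x j.
Proof.
  intros Hj. rewrite <- (rsum_ident_r m j x Hj). apply rsum_ext. intros i _.
  unfold ident. rewrite Nat.eqb_sym. lra.
Qed.

Lemma rsum_nonneg_eq0 m f : (forall j, (j < m)%nat -> 0 <= f j) -> rsum m f = 0 ->
  forall j, (j < m)%nat -> f j = 0.
Proof.
  intros Hf Hs j Hj. pose proof (rsum_ge_term m f j Hf Hj). pose proof (Hf j Hj). lra.
Qed.

Lemma finite_pos_lower_bound m f : (forall i, (i < m)%nat -> 0 < f i) ->
  exists c, 0 < c /\ forall i, (i < m)%nat -> c <= f i.
Proof.
  induction m as [|m IH]; intros H; [exists 1; split; [lra|intros; lia]|].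
  destruct IH as [c [Hc Hci]]; [intros; apply H; lia|].
  exists (Rmin c (f m)). split; [apply Rmin_glb_lt; auto|].
  intros i Hi. destruct (Nat.eq_dec i m) as [->|Hne]; [apply Rmin_r|].
  eapply Rle_trans; [apply Rmin_l|apply Hci; lia].
Qed.

Lemma finite_contraction_factor m (lam w : nat -> R) : (forall i, (i < m)%nat -> 0 < lam i) ->
  (forall i, (i < m)%nat -> w i < lam i) ->
  exists c, 0 < c <= 1 /\ forall i, (i < m)%nat -> w i <= (1 - c) * lam i.
Proof.
  intros Hl Hw.
  destruct (finite_pos_lower_bound m (fun i => (lam i - w i) / lam i)) as [c0 [Hc0 Hc0i]].
  { intros i Hi. pose proof (Hw i Hi). pose proof (Hl i Hi). apply Rdiv_lt_0_compat; lra. }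
  exists (Rmin c0 1). pose proof (Rmin_l c0 1). pose proof (Rmin_r c0 1).
  split; [split; [apply Rmin_pos|]; lra|]. intros i Hi.
  pose proof (Hc0i i Hi). pose proof (Hl i Hi).
  assert (c0 * lam i <= lam i - w i).
  { apply Rle_trans with ((lam i - w i) / lam i * lam i); [apply Rmult_le_compat_r; lra|].
    right. field. lra. }
  nra.
Qed.

Lemma finite_ratio_bound m (g h : nat -> R) : (forall i, (i < m)%nat -> 0 < g i) ->
  exists K, forall i, (i < m)%nat -> h i <= K * g i.
Proof.
  induction m as [|m IH]; intros Hg; [exists 0; intros; lia|].
  destruct IH as [K HK]; [intros; apply Hg; lia|].
  pose proof (Hg m ltac:(lia)).
  exists (Rmax K (h m / g m)). intros i Hi. destruct (Nat.eq_dec i m) as [->|Hne].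
  - apply Rle_trans with (h m / g m * g m); [right; field; lra|].
    apply Rmult_le_compat_r; [lra|apply Rmax_r].
  - pose proof (HK i ltac:(lia)). pose proof (Hg i ltac:(lia)).
    pose proof (Rmax_l K (h m / g m)). nra.
Qed.

Lemma mmul_assoc n A B C i j :
  mmul n (mmul n A B) C i j = mmul n A (mmul n B C) i j.
Proof.
  unfold mmul.
  transitivity (rsum n (fun k => rsum n (fun l => A i l * B l k * C k j))).
  - apply rsum_ext. intros k _. rewrite <- rsum_scal_r. apply rsum_ext. intros; lra.
  - rewrite rsum_swap. apply rsum_ext. intros l _.
    rewrite <- rsum_scal_l. apply rsum_ext. intros; lra.
Qed.

Lemma mmul_ident_l n A i j : (i < n)%nat -> mmul n ident A i j = A i j.
Proof. intros Hi. exact (rsum_ident_r n i (fun k => A k j) Hi). Qed.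

Lemma mmul_ident_r n A i j : (j < n)%nat -> mmul n A ident i j = A i j.
Proof. intros Hj. exact (rsum_ident_l n j (fun k => A i k) Hj). Qed.

Lemma mpow_succ_r n A k i j : (i < n)%nat -> (j < n)%nat ->
  mpow n A (S k) i j = mmul n (mpow n A k) A i j.
Proof.
  revert i j. induction k as [|k IH]; intros i j Hi Hj.
  - simpl. rewrite mmul_ident_l by auto. now rewrite mmul_ident_r.
  - change (mmul n A (mpow n A (S k)) i j = mmul n (mmul n A (mpow n A k)) A i j).
    rewrite mmul_assoc. unfold mmul at 1 2. apply rsum_ext. intros l Hl.
    now rewrite IH.
Qed.

Lemma vm_mmul n l A B j : vm n l (mmul n A B) j = vm n (vm n l A) B j.
Proof.
  unfold vm, mmul.
  transitivity (rsum n (fun i => rsum n (fun k => l i * A i k * B k j))).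
  - apply rsum_ext. intros. rewrite <- rsum_scal_l. apply rsum_ext; intros; lra.
  - rewrite rsum_swap. apply rsum_ext. intros.
    rewrite <- rsum_scal_r. apply rsum_ext; intros; lra.
Qed.

Lemma dot_mv n l A x : dot n l (mv n A x) = dot n (vm n l A) x.
Proof.
  unfold dot, mv, vm.
  transitivity (rsum n (fun i => rsum n (fun k => l i * A i k * x k))).
  - apply rsum_ext. intros. rewrite <- rsum_scal_l. apply rsum_ext; intros; lra.
  - rewrite rsum_swap. apply rsum_ext. intros.
    rewrite <- rsum_scal_r. apply rsum_ext; intros; lra.
Qed.

Lemma dot_mv_mv n l J E x : dot n l (mv n J (mv n E x)) = dot n (vm n l (mmul n J E)) x.
Proof. rewrite !dot_mv. apply rsum_ext. intros i Hi. now rewrite vm_mmul. Qed.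

Lemma vm_ext n a b M j : (forall i, (i < n)%nat -> a i = b i) -> vm n a M j = vm n b M j.
Proof. intros H. apply rsum_ext. intros i Hi. now rewrite H. Qed.

Lemma vm_ident n l j : (j < n)%nat -> vm n l ident j = l j.
Proof. apply rsum_ident_l. Qed.

Lemma vm_msub_ident n l M j : (j < n)%nat -> vm n l (msub M ident) j = vm n l M j - l j.
Proof.
  intros Hj. unfold vm, msub. rewrite <- (rsum_ident_l n j l Hj), <- rsum_minus.
  apply rsum_ext. intros; ring.
Qed.

Lemma vm_lin n (a : R) u w M j :
  vm n (fun i => a * u i + w i) M j = a * vm n u M j + vm n w M j.
Proof. unfold vm. rewrite <- rsum_scal_l, <- rsum_plus. apply rsum_ext. intros; ring. Qed.

Lemma vm_scal n (a : R) u M j : vm n (fun i => a * u i) M j = a * vm n u M j.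
Proof. unfold vm. rewrite <- rsum_scal_l. apply rsum_ext. intros; ring. Qed.

Lemma vm_minus n u w M j : vm n (fun i => u i - w i) M j = vm n u M j - vm n w M j.
Proof. unfold vm. rewrite <- rsum_minus. apply rsum_ext. intros; ring. Qed.

Lemma vm_nonneg n l M j : nonneg_mat n M -> vnonneg n l -> (j < n)%nat -> 0 <= vm n l M j.
Proof.
  intros HM Hl Hj. apply rsum_nonneg. intros i Hi.
  apply Rmult_le_pos; [apply Hl|apply HM]; auto.
Qed.

Lemma vm_le n l1 l2 M j : nonneg_mat n M -> (forall i, (i < n)%nat -> l1 i <= l2 i) ->
  (j < n)%nat -> vm n l1 M j <= vm n l2 M j.
Proof.
  intros HM Hl Hj. apply rsum_le. intros i Hi.
  apply Rmult_le_compat_r; [apply HM|apply Hl]; auto.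
Qed.

Lemma vm_pos_diag n l M j : nonneg_mat n M -> vnonneg n l -> (j < n)%nat ->
  0 < l j -> 0 < M j j -> 0 < vm n l M j.
Proof.
  intros HM Hl Hj Hlj HMj. eapply Rlt_le_trans; [|apply (rsum_ge_term n (fun i => l i * M i j) j); auto].
  - now apply Rmult_lt_0_compat.
  - intros i Hi. apply Rmult_le_pos; [apply Hl|apply HM]; auto.
Qed.

Lemma mv_le n M u v i : nonneg_mat n M -> (forall j, (j < n)%nat -> u j <= v j) ->
  (i < n)%nat -> mv n M u i <= mv n M v i.
Proof.
  intros HM H Hi. apply rsum_le. intros j Hj.
  apply Rmult_le_compat_l; [apply HM|apply H]; auto.
Qed.

Lemma dot_le_r n l x1 x2 : vnonneg n l -> (forall i, (i < n)%nat -> x1 i <= x2 i) ->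
  dot n l x1 <= dot n l x2.
Proof.
  intros Hl Hx. apply rsum_le. intros i Hi.
  apply Rmult_le_compat_l; [apply Hl|apply Hx]; auto.
Qed.

Lemma dot_le_l n l1 l2 x : vnonneg n x -> (forall i, (i < n)%nat -> l1 i <= l2 i) ->
  dot n l1 x <= dot n l2 x.
Proof.
  intros Hx Hl. apply rsum_le. intros i Hi.
  apply Rmult_le_compat_r; [apply Hx|apply Hl]; auto.
Qed.

Definition evec (j : nat) : vec := fun k => if Nat.eqb k j then 1 else 0.

Lemma evec_nonneg n j : vnonneg n (evec j).
Proof. intros k _. unfold evec. destruct (Nat.eqb k j); lra. Qed.

Lemma dot_evec n l j : (j < n)%nat -> dot n l (evec j) = l j.
Proof. intros Hj. exact (rsum_ident_l n j l Hj). Qed.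

Lemma vm_slack n v lam M : (forall j, (j < n)%nat -> vm n v M j < lam j) ->
  exists eps, 0 < eps /\ forall j, (j < n)%nat -> vm n (fun i => v i + eps) M j < lam j.
Proof.
  intros H. set (o := fun j => Rabs (vm n (fun _ => 1) M j)).
  destruct (finite_pos_lower_bound n (fun j => (lam j - vm n v M j) / (1 + o j))) as [c [Hc Hcj]].
  { intros j Hj. pose proof (H j Hj). pose proof (Rabs_pos (vm n (fun _ => 1) M j)).
    apply Rdiv_lt_0_compat; unfold o; lra. }
  exists (c / 2). split; [lra|]. intros j Hj.
  rewrite (vm_ext n _ (fun i => c / 2 * 1 + v i)) by (intros; ring). rewrite vm_lin.
  pose proof (Hcj j Hj). pose proof (H j Hj). pose proof (RRle_abs (vm n (fun _ => 1) M j)).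
  pose proof (Rabs_pos (vm n (fun _ => 1) M j)). fold (o j) in *.
  assert (c * (1 + o j) <= lam j - vm n v M j).
  { replace (lam j - vm n v M j) with ((lam j - vm n v M j) / (1 + o j) * (1 + o j)) by (field; lra).
    apply Rmult_le_compat_r; lra. }
  nra.
Qed.

(** * The matrix exponential as a power series *)

Definition row_bound (n : nat) (A : mat) (i : nat) : R := 1 + rsum n (fun l => Rabs (A i l)).
Definition mat_bound (n : nat) (A : mat) : R := 1 + rsum n (fun i => rsum n (fun l => Rabs (A i l))).

Lemma row_bound_ge1 n A i : 1 <= row_bound n A i.
Proof.
  unfold row_bound. pose proof (rsum_nonneg n (fun l => Rabs (A i l)) (fun l _ => Rabs_pos _)). lra.
Qed.

Lemma mat_bound_ge1 n A : 1 <= mat_bound n A.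
Proof.
  unfold mat_bound.
  pose proof (rsum_nonneg n (fun i => rsum n (fun l => Rabs (A i l)))
                (fun i _ => rsum_nonneg n _ (fun l _ => Rabs_pos _))). lra.
Qed.

Lemma row_bound_le n A i : (i < n)%nat -> row_bound n A i <= mat_bound n A.
Proof.
  intros Hi. unfold row_bound, mat_bound.
  pose proof (rsum_ge_term n (fun i => rsum n (fun l => Rabs (A i l))) i
                (fun i _ => rsum_nonneg n _ (fun l _ => Rabs_pos _)) Hi).
  simpl in *. lra.
Qed.

Lemma mpow_bound n A k i j : Rabs (mpow n A k i j) <= row_bound n A i * mat_bound n A ^ k.
Proof.
  revert i. induction k as [|k IH]; intros i; simpl.
  - pose proof (row_bound_ge1 n A i). unfold ident.
    destruct (Nat.eqb i j); rewrite ?Rabs_R1, ?Rabs_R0; lra.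
  - pose proof (mat_bound_ge1 n A) as HM. set (M := mat_bound n A) in *.
    unfold mmul. eapply Rle_trans; [apply rsum_abs|].
    apply Rle_trans with (rsum n (fun l => Rabs (A i l)) * (M * M ^ k)).
    + rewrite <- rsum_scal_r. apply rsum_le. intros l Hl. rewrite Rabs_mult.
      apply Rmult_le_compat_l; [apply Rabs_pos|].
      eapply Rle_trans; [apply IH|]. apply Rmult_le_compat_r.
      * apply pow_le. lra.
      * now apply row_bound_le.
    + unfold row_bound. pose proof (pow_le M (S k) ltac:(lra)). simpl in *. nra.
Qed.

Definition mexp_coef (n : nat) (A : mat) (i j : nat) (k : nat) : R :=
  mpow n A k i j / INR (Factorial.fact k).

Lemma mexp_coef_CV_disk n A i j x : CV_disk (mexp_coef n A i j) x.
Proof.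
  set (M := mat_bound n A).
  apply (@ex_series_le R_AbsRing R_CompleteNormedModule _
           (fun k => row_bound n A i * (/ INR (Factorial.fact k) * (M * Rabs x) ^ k))).
  - intros k. change (Rabs (Rabs (mexp_coef n A i j k * x ^ k)) <=
                      row_bound n A i * (/ INR (Factorial.fact k) * (M * Rabs x) ^ k)).
    rewrite Rabs_Rabsolu. unfold mexp_coef, Rdiv. rewrite !Rabs_mult, Rpow_mult_distr, <- RPow_abs.
    assert (Hf : 0 < / INR (Factorial.fact k)) by (apply Rinv_0_lt_compat, INR_fact_lt_0).
    rewrite (Rabs_right (/ _)) by lra.
    pose proof (mpow_bound n A k i j) as Hb. fold M in Hb. pose proof (pow_le (Rabs x) k (Rabs_pos x)).
    replace (row_bound n A i * (/ INR (Factorial.fact k) * (M ^ k * Rabs x ^ k)))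
      with (row_bound n A i * M ^ k * / INR (Factorial.fact k) * Rabs x ^ k) by ring.
    apply Rmult_le_compat_r; [auto|]. apply Rmult_le_compat_r; lra.
  - apply (ex_series_scal_l (row_bound n A i)
             (fun k => / INR (Factorial.fact k) * (M * Rabs x) ^ k)).
    destruct (exist_exp (M * Rabs x)) as [l Hl]. exists l. now apply is_series_Reals.
Qed.

Lemma mexp_coef_radius n A i j x : Rbar_lt (Rabs x) (CV_radius (mexp_coef n A i j)).
Proof.
  destruct (Lub_Rbar_correct (CV_disk (mexp_coef n A i j))) as [Hub _].
  specialize (Hub (Rabs x + 1) (mexp_coef_CV_disk n A i j _)).
  unfold CV_radius. destruct (Lub_Rbar (CV_disk (mexp_coef n A i j))); simpl in *; auto; lra.
Qed.

Lemma mexp_coef_ex n A i j x : ex_pseries (mexp_coef n A i j) x.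
Proof. apply CV_disk_correct, mexp_coef_CV_disk. Qed.

Lemma mexp_partial_cv n A t i j :
  Un_cv (mexp_partial n A t i j) (PSeries (mexp_coef n A i j) t).
Proof.
  apply is_lim_seq_Reals.
  eapply is_lim_seq_ext; [|exact (PSeries_correct _ _ (mexp_coef_ex n A i j t))].
  intros N. simpl. rewrite sum_n_Reals. apply sum_eq. intros k _.
  rewrite pow_n_pow. unfold scal; simpl. unfold mult; simpl. unfold mexp_coef, Rdiv. ring.
Qed.

Lemma mexp_PSeries n A t i j : mexp n A t i j = PSeries (mexp_coef n A i j) t.
Proof.
  apply (UL_sequence (mexp_partial n A t i j)); [|apply mexp_partial_cv].
  apply (epsilon_spec (inhabits 0) (fun l => Un_cv (mexp_partial n A t i j) l)).
  eexists. apply mexp_partial_cv.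
Qed.

Lemma mexp_0 n A i j : mexp n A 0 i j = ident i j.
Proof. rewrite mexp_PSeries, PSeries_0. unfold mexp_coef. simpl. lra. Qed.

Lemma vm_mexp_0 n A c j : (j < n)%nat -> vm n c (mexp n A 0) j = c j.
Proof.
  intros Hj. rewrite <- (vm_ident n c j Hj). apply rsum_ext. intros. now rewrite mexp_0.
Qed.

Lemma PSeries_rsum m (c : nat -> R) (b : nat -> nat -> R) x :
  (forall l, ex_pseries (b l) x) ->
  PSeries (fun k => rsum m (fun l => c l * b l k)) x = rsum m (fun l => c l * PSeries (b l) x).
Proof.
  intros Hb.
  assert (Hex : forall p, ex_pseries (fun k => rsum p (fun l => c l * b l k)) x).
  { induction p as [|p IH]; simpl.
    - apply (ex_pseries_ext (PS_scal 0 (b 0%nat))).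
      + intros k. unfold PS_scal, scal; simpl. unfold mult; simpl. ring.
      + apply ex_pseries_scal; auto. unfold mult; simpl. ring.
    - apply (ex_pseries_ext (PS_plus (fun k => rsum p (fun l => c l * b l k)) (PS_scal (c p) (b p)))).
      + intros k. reflexivity.
      + apply ex_pseries_plus; auto. apply ex_pseries_scal; auto. unfold mult; simpl. ring. }
  induction m as [|m IH]; simpl.
  - apply PSeries_const_0.
  - rewrite <- IH, <- PSeries_scal, <- PSeries_plus; auto.
    apply ex_pseries_scal; auto. unfold mult; simpl. ring.
Qed.

Definition mexp_dcoef (n : nat) (A : mat) (i j : nat) (k : nat) : R :=
  mpow n A (S k) i j / INR (Factorial.fact k).

Lemma mexp_derive n A t i j :
  derivable_pt_lim (fun s => mexp n A s i j) t (PSeries (mexp_dcoef n A i j) t).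
Proof.
  apply is_derive_Reals.
  apply (is_derive_ext (PSeries (mexp_coef n A i j))); [intros; symmetry; apply mexp_PSeries|].
  replace (PSeries (mexp_dcoef n A i j) t) with (PSeries (PS_derive (mexp_coef n A i j)) t).
  - apply is_derive_PSeries, mexp_coef_radius.
  - apply PSeries_ext. intros k. unfold PS_derive, mexp_coef, mexp_dcoef.
    change (Factorial.fact (S k)) with (S k * Factorial.fact k)%nat. rewrite mult_INR. field.
    split; [apply INR_fact_neq_0|apply not_0_INR; lia].
Qed.

Lemma mmul_mexp_l n A t i j :
  mmul n A (mexp n A t) i j = PSeries (mexp_dcoef n A i j) t.
Proof.
  unfold mmul. rewrite (rsum_ext n _ (fun l => A i l * PSeries (mexp_coef n A l j) t))
    by (intros; now rewrite mexp_PSeries).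
  rewrite <- PSeries_rsum by (intros; apply mexp_coef_ex).
  apply PSeries_ext. intros k. unfold mexp_dcoef, mexp_coef, Rdiv. simpl mpow. unfold mmul.
  rewrite <- rsum_scal_r. apply rsum_ext. intros; ring.
Qed.

Lemma mmul_mexp_r n A t i j : (i < n)%nat -> (j < n)%nat ->
  mmul n (mexp n A t) A i j = PSeries (mexp_dcoef n A i j) t.
Proof.
  intros Hi Hj.
  unfold mmul. rewrite (rsum_ext n _ (fun l => A l j * PSeries (mexp_coef n A i l) t))
    by (intros; rewrite mexp_PSeries; ring).
  rewrite <- PSeries_rsum by (intros; apply mexp_coef_ex).
  apply PSeries_ext. intros k. unfold mexp_dcoef, mexp_coef, Rdiv.
  rewrite mpow_succ_r by auto. unfold mmul.
  rewrite <- rsum_scal_r. apply rsum_ext. intros; ring.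
Qed.

Lemma mexp_derive_l n A t i j :
  derivable_pt_lim (fun s => mexp n A s i j) t (mmul n A (mexp n A t) i j).
Proof. rewrite mmul_mexp_l. apply mexp_derive. Qed.

Lemma mexp_derive_r n A t i j : (i < n)%nat -> (j < n)%nat ->
  derivable_pt_lim (fun s => mexp n A s i j) t (mmul n (mexp n A t) A i j).
Proof. intros. rewrite mmul_mexp_r by auto. apply mexp_derive. Qed.

(** * Linear row-vector ODEs *)

Lemma derivable_pt_lim_rsum m (f : nat -> R -> R) (df : nat -> R) t :
  (forall l, (l < m)%nat -> derivable_pt_lim (f l) t (df l)) ->
  derivable_pt_lim (fun s => rsum m (fun l => f l s)) t (rsum m df).
Proof.
  induction m as [|m IH]; intros H; simpl.
  - apply derivable_pt_lim_const.
  - apply (derivable_pt_lim_plus (fun s => rsum m (fun l => f l s)) (f m)).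
    + apply IH. intros; apply H; lia.
    + apply H; lia.
Qed.

Lemma derivable_pt_lim_exp_scal c t :
  derivable_pt_lim (fun s => exp (c * s)) t (exp (c * t) * c).
Proof.
  apply (derivable_pt_lim_comp (fun s => c * s) exp).
  - pose proof (derivable_pt_lim_scal (fun s => s) c t 1 (derivable_pt_lim_id t)) as H.
    rewrite Rmult_1_r in H. exact H.
  - apply derivable_pt_lim_exp.
Qed.

Lemma derivable_pt_lim_shift f s t l :
  derivable_pt_lim f (s + t) l -> derivable_pt_lim (fun u => f (s + u)) t l.
Proof.
  intros H eps Heps. destruct (H eps Heps) as [d Hd]. exists d. intros h Hh0 Hh.
  rewrite <- Rplus_assoc. now apply Hd.
Qed.

Lemma derivable_pt_lim_reflect f s t l :
  derivable_pt_lim f (s - t) l -> derivable_pt_lim (fun u => f (s - u)) t (- l).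
Proof.
  intros H eps Heps. destruct (H eps Heps) as [d Hd]. exists d. intros h Hh0 Hh.
  replace (s - (t + h)) with (s - t + - h) by ring.
  replace ((f (s - t + - h) - f (s - t)) / h - - l)
    with (- ((f (s - t + - h) - f (s - t)) / - h - l)) by (field; auto).
  rewrite Rabs_Ropp. apply Hd; [lra|now rewrite Rabs_Ropp].
Qed.

Lemma deriv_nonpos_le f f' a b : a <= b ->
  (forall c, a <= c <= b -> derivable_pt_lim f c (f' c)) ->
  (forall c, a <= c <= b -> f' c <= 0) -> f b <= f a.
Proof.
  intros Hab Hd Hn. destruct (Rle_lt_or_eq_dec a b Hab) as [Hlt|<-]; [|lra].
  destruct (MVT_cor2 f f' a b Hlt Hd) as [c [Hc1 Hc2]].
  assert (f' c <= 0) by (apply Hn; lra).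
  assert (f' c * (b - a) <= 0) by nra. lra.
Qed.

Lemma vm_derive n c (M : R -> mat) (D : mat) t j :
  (forall l, (l < n)%nat -> derivable_pt_lim (fun s => M s l j) t (D l j)) ->
  derivable_pt_lim (fun s => vm n c (M s) j) t (vm n c D j).
Proof.
  intros HM. apply (derivable_pt_lim_rsum n (fun l s => c l * M s l j)).
  intros l Hl. replace (c l * D l j) with (0 * M t l j + c l * D l j) by ring.
  apply (derivable_pt_lim_mult (fun _ => c l)); [apply derivable_pt_lim_const|auto].
Qed.

Lemma vm_mexp_derive_r n A c t j : (j < n)%nat ->
  derivable_pt_lim (fun s => vm n c (mexp n A s) j) t (vm n (vm n c (mexp n A t)) A j).
Proof.
  intros Hj. rewrite <- vm_mmul. apply vm_derive. intros l Hl. now apply mexp_derive_r.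
Qed.

Lemma vm_mexp_derive_l n A c t j :
  derivable_pt_lim (fun s => vm n c (mexp n A s) j) t (vm n (vm n c A) (mexp n A t) j).
Proof. rewrite <- vm_mmul. apply vm_derive. intros l _. apply mexp_derive_l. Qed.

Lemma quad_growth_bound n B (y : vec) :
  rsum n (fun i => 2 * (y i * vm n y B i)) <= 2 * mat_bound n B * rsum n (fun i => y i * y i).
Proof.
  set (S := rsum n (fun i => y i * y i)).
  assert (HS : 0 <= S) by (apply rsum_nonneg; intros; nra).
  assert (Hsq : forall i, (i < n)%nat -> y i * y i <= S)
    by (intros i Hi; apply (rsum_ge_term n (fun i => y i * y i)); auto; intros; nra).
  assert (Hbil : rsum n (fun i => y i * vm n y B i) <= (mat_bound n B - 1) * S).
  { apply Rle_trans with (rsum n (fun i => rsum n (fun k => Rabs (B k i) * S))).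
    - apply rsum_le. intros i Hi. unfold vm. rewrite <- rsum_scal_l. apply rsum_le. intros k Hk.
      pose proof (Hsq i Hi). pose proof (Hsq k Hk).
      assert (Rabs (y i * y k) <= S)
        by (apply Rabs_le; pose proof (pow2_ge_0 (y i - y k)); pose proof (pow2_ge_0 (y i + y k)); split; nra).
      replace (y i * (y k * B k i)) with (y i * y k * B k i) by ring.
      eapply Rle_trans; [apply RRle_abs|]. rewrite Rabs_mult.
      apply Rmult_le_compat_r with (r := Rabs (B k i)) in H1; [|apply Rabs_pos]. lra.
    - rewrite (rsum_ext n _ (fun i => rsum n (fun k => Rabs (B k i)) * S))
        by (intros; apply rsum_scal_r).
      rewrite rsum_scal_r, rsum_swap. unfold mat_bound. lra. }
  rewrite rsum_scal_l. pose proof (mat_bound_ge1 n B). nra.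
Qed.

Lemma row_ode_zero n (B : mat) (x : R -> vec) :
  (forall t j, (j < n)%nat -> derivable_pt_lim (fun s => x s j) t (vm n (x t) B j)) ->
  (forall j, (j < n)%nat -> x 0 j = 0) ->
  forall t, 0 <= t -> forall j, (j < n)%nat -> x t j = 0.
Proof.
  intros Hd H0 t Ht j Hj.
  set (K := 2 * mat_bound n B).
  set (S := fun s => rsum n (fun i => x s i * x s i)).
  set (dS := fun s => rsum n (fun i => 2 * (x s i * vm n (x s) B i))).
  assert (HS : forall s, derivable_pt_lim S s (dS s)).
  { intros s. apply (derivable_pt_lim_rsum n (fun i s => x s i * x s i)). intros i Hi.
    replace (2 * (x s i * vm n (x s) B i))
      with (vm n (x s) B i * x s i + x s i * vm n (x s) B i) by ring.
    apply (derivable_pt_lim_mult (fun s => x s i)); auto. }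
  assert (Hdecay : exp (- K * t) * S t <= exp (- K * 0) * S 0).
  { apply (deriv_nonpos_le (fun s => exp (- K * s) * S s)
             (fun s => exp (- K * s) * - K * S s + exp (- K * s) * dS s) 0 t Ht).
    - intros c _. apply (derivable_pt_lim_mult (fun s => exp (- K * s)));
        [apply derivable_pt_lim_exp_scal|apply HS].
    - intros c _. pose proof (quad_growth_bound n B (x c)). pose proof (exp_pos (- K * c)).
      fold K in H. change (dS c <= K * S c) in H. nra. }
  assert (HS0 : S 0 = 0).
  { unfold S. rewrite (rsum_ext n _ (fun _ => 0)) by (intros i Hi; rewrite H0; auto; ring).
    apply rsum_const0. }
  assert (Hxj : x t j * x t j <= S t)
    by (apply (rsum_ge_term n (fun i => x t i * x t i)); auto; intros; nra).
  rewrite HS0, Rmult_0_r in Hdecay. pose proof (exp_pos (- K * t)).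
  assert (St0 : S t <= 0) by nra.
  assert (Hsq : x t j * x t j = 0) by nra.
  now destruct (Rmult_integral _ _ Hsq).
Qed.

Lemma row_ode_solution n A (y : R -> vec) :
  (forall t j, (j < n)%nat -> derivable_pt_lim (fun s => y s j) t (vm n (y t) A j)) ->
  forall t, 0 <= t -> forall j, (j < n)%nat -> y t j = vm n (y 0) (mexp n A t) j.
Proof.
  intros Hd t Ht j Hj.
  enough (y t j - vm n (y 0) (mexp n A t) j = 0) by lra.
  apply (row_ode_zero n A (fun s j => y s j - vm n (y 0) (mexp n A s) j)); auto.
  - intros s k Hk. rewrite vm_minus.
    apply (derivable_pt_lim_minus (fun s => y s k)); [auto|now apply vm_mexp_derive_r].
  - intros k Hk. rewrite vm_mexp_0 by auto. ring.
Qed.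

Lemma mexp_plus n A s t i j : 0 <= t -> (i < n)%nat -> (j < n)%nat ->
  mexp n A (s + t) i j = mmul n (mexp n A s) (mexp n A t) i j.
Proof.
  intros Ht Hi Hj.
  rewrite (row_ode_solution n A (fun u l => mexp n A (s + u) i l)); auto.
  - unfold vm, mmul. apply rsum_ext. intros. now rewrite Rplus_0_r.
  - intros u k Hk. apply (derivable_pt_lim_shift (fun v => mexp n A v i k)).
    now apply mexp_derive_r.
Qed.

(** * Positivity of the exponential of a Metzler matrix *)

Definition diag_shift (n : nat) (A : mat) : mat :=
  fun i j => A i j + mat_bound n A * ident i j.

Lemma diag_shift_nonneg n A : Metzler n A -> nonneg_mat n (diag_shift n A).
Proof.
  intros HA i j Hi Hj. unfold diag_shift, ident.
  destruct (Nat.eq_dec i j) as [<-|Hne].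
  - rewrite Nat.eqb_refl.
    pose proof (rsum_ge_term n (fun l => Rabs (A i l)) i (fun l _ => Rabs_pos _) Hi).
    pose proof (row_bound_le n A i Hi). unfold row_bound in *.
    pose proof (Rabs_maj2 (A i i)). lra.
  - replace (Nat.eqb i j) with false by (symmetry; now apply Nat.eqb_neq).
    pose proof (HA i j Hi Hj Hne). lra.
Qed.

Lemma mpow_nonneg n B k : nonneg_mat n B -> nonneg_mat n (mpow n B k).
Proof.
  intros HB. induction k as [|k IH]; intros i j Hi Hj; simpl.
  - unfold ident. destruct (Nat.eqb i j); lra.
  - apply rsum_nonneg. intros l Hl. apply Rmult_le_pos; [apply HB|apply IH]; auto.
Qed.

Lemma mexp_ge_ident n B t i j : nonneg_mat n B -> 0 <= t -> (i < n)%nat -> (j < n)%nat ->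
  ident i j <= mexp n B t i j.
Proof.
  intros HB Ht Hi Hj.
  assert (Hpartial : forall N, ident i j <= mexp_partial n B t i j N).
  { induction N as [|N IH].
    - unfold mexp_partial. simpl. unfold ident. destruct (Nat.eqb i j); lra.
    - change (ident i j <= mexp_partial n B t i j N
                + t ^ S N / INR (Factorial.fact (S N)) * mpow n B (S N) i j).
      enough (0 <= t ^ S N / INR (Factorial.fact (S N)) * mpow n B (S N) i j) by lra.
      apply Rmult_le_pos; [|apply mpow_nonneg; auto].
      apply Rmult_le_pos; [now apply pow_le|left; apply Rinv_0_lt_compat, INR_fact_lt_0]. }
  rewrite mexp_PSeries.
  apply (is_lim_seq_le (fun _ => ident i j) (mexp_partial n B t i j) (ident i j)
           (PSeries (mexp_coef n B i j) t) Hpartial (is_lim_seq_const _)).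
  apply is_lim_seq_Reals, mexp_partial_cv.
Qed.

(* Reduces positivity of [e^{At}] to the series of the nonnegative matrix [A + cI]. *)
Lemma mexp_diag_shift n A t i j : 0 <= t -> (i < n)%nat -> (j < n)%nat ->
  mexp n A t i j = exp (- mat_bound n A * t) * mexp n (diag_shift n A) t i j.
Proof.
  intros Ht Hi Hj. set (c := mat_bound n A). set (B := diag_shift n A).
  rewrite (row_ode_solution n A (fun u l => exp (- c * u) * mexp n B u i l)); auto.
  - rewrite <- (rsum_ident_r n i (fun l => mexp n A t l j) Hi).
    apply rsum_ext. intros l Hl. now rewrite Rmult_0_r, exp_0, Rmult_1_l, mexp_0.
  - intros u k Hk.
    replace (vm n (fun l => exp (- c * u) * mexp n B u i l) A k)
      with (exp (- c * u) * - c * mexp n B u i k + exp (- c * u) * mmul n (mexp n B u) B i k).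
    + apply (derivable_pt_lim_mult (fun u => exp (- c * u)) (fun u => mexp n B u i k));
        [apply derivable_pt_lim_exp_scal|now apply mexp_derive_r].
    + unfold vm, mmul.
      rewrite (rsum_ext n (fun l => mexp n B u i l * B l k)
                 (fun l => mexp n B u i l * A l k + c * (mexp n B u i l * ident l k)))
        by (intros; unfold B, diag_shift; fold c; ring).
      rewrite rsum_plus, rsum_scal_l, rsum_ident_l by auto.
      rewrite (rsum_ext n (fun l => exp (- c * u) * mexp n B u i l * A l k)
                 (fun l => exp (- c * u) * (mexp n B u i l * A l k))) by (intros; ring).
      rewrite rsum_scal_l. ring.
Qed.

Lemma mexp_nonneg n A t : Metzler n A -> 0 <= t -> nonneg_mat n (mexp n A t).
Proof.
  intros HA Ht i j Hi Hj. rewrite mexp_diag_shift by auto.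
  apply Rmult_le_pos; [left; apply exp_pos|].
  pose proof (mexp_ge_ident n _ t i j (diag_shift_nonneg n A HA) Ht Hi Hj).
  unfold ident in H. destruct (Nat.eqb i j); lra.
Qed.

Lemma mexp_diag_pos n A t j : Metzler n A -> 0 <= t -> (j < n)%nat -> 0 < mexp n A t j j.
Proof.
  intros HA Ht Hj. rewrite mexp_diag_shift by auto.
  apply Rmult_lt_0_compat; [apply exp_pos|].
  pose proof (mexp_ge_ident n _ t j j (diag_shift_nonneg n A HA) Ht Hj Hj).
  unfold ident in H. rewrite Nat.eqb_refl in H. lra.
Qed.

Lemma vm_mexp_le n A v s j : Metzler n A -> vnonpos n (vm n v A) -> 0 <= s -> (j < n)%nat ->
  vm n v (mexp n A s) j <= v j.
Proof.
  intros HA Hv Hs Hj. rewrite <- (vm_mexp_0 n A v j Hj).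
  apply (deriv_nonpos_le (fun s => vm n v (mexp n A s) j)
           (fun t => vm n (vm n v A) (mexp n A t) j) 0 s Hs).
  - intros. apply vm_mexp_derive_l.
  - intros c Hc. rewrite <- (rsum_const0 n). apply rsum_le. intros i Hi.
    pose proof (Hv i Hi). pose proof (mexp_nonneg n A c HA ltac:(lra) i j Hi Hj). nra.
Qed.

(** * One-sided derivatives on a closed interval *)

Lemma has_deriv_on_iff_limit a b f df :
  has_deriv_on a b f df <-> forall tau, a <= tau <= b ->
    limit1_in (fun s => (f s - f tau) / (s - tau)) (fun s => a <= s <= b /\ s <> tau)
      (df tau) tau.
Proof.
  split; intros H tau Htau eps Heps; destruct (H tau Htau eps Heps) as [d [Hd Hs]];
    exists d; split; auto.
  - intros s [[Hs1 Hs2] Hs3]. apply Hs; auto. split; auto. apply Rabs_pos_lt. lra.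
  - intros s Hs1 [Hs2 Hs3]. apply Hs. split; [split; auto|auto].
    intros ->. rewrite Rminus_diag, Rabs_R0 in Hs2. lra.
Qed.

Lemma has_deriv_on_continuous a b f df x : has_deriv_on a b f df -> a <= x <= b ->
  limit1_in f (fun s => a <= s <= b /\ s <> x) (f x) x.
Proof.
  intros H Hx. rewrite has_deriv_on_iff_limit in H.
  pose proof (limit_plus _ _ _ _ _ _ (limit_free (fun _ => f x) _ x x)
                (limit_mul _ _ _ _ _ _ (H x Hx) (limit_minus _ _ _ _ _ _ (lim_x _ x) (limit_free (fun _ => x) _ x x))))
    as Hlim.
  rewrite Rminus_diag, Rmult_0_r, Rplus_0_r in Hlim.
  refine (limit1_ext _ _ _ _ _ _ Hlim). intros s [_ Hs].
  field. now apply Rminus_eq_contra.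
Qed.

Lemma has_deriv_on_interior a b f df tau : has_deriv_on a b f df -> a < tau < b ->
  derivable_pt_lim f tau (df tau).
Proof.
  intros H Ht eps Heps. destruct (H tau ltac:(lra) eps Heps) as [d [Hd Hs]].
  assert (Hpos : 0 < Rmin d (Rmin (tau - a) (b - tau))) by (repeat apply Rmin_pos; lra).
  exists (mkposreal _ Hpos). intros h Hh0 Hh. simpl in Hh.
  pose proof (Rmin_l d (Rmin (tau - a) (b - tau))). pose proof (Rmin_r d (Rmin (tau - a) (b - tau))).
  pose proof (Rmin_l (tau - a) (b - tau)). pose proof (Rmin_r (tau - a) (b - tau)).
  apply Rabs_def2 in Hh as [Hh1 Hh2].
  specialize (Hs (tau + h)). replace (tau + h - tau) with h in Hs by ring.
  apply Hs; [lra|]. split; [now apply Rabs_pos_lt|apply Rabs_def1; lra].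
Qed.

Lemma derivable_has_deriv_on a b f df :
  (forall tau, a <= tau <= b -> derivable_pt_lim f tau (df tau)) -> has_deriv_on a b f df.
Proof.
  intros H tau Ht eps Heps. destruct (H tau Ht eps Heps) as [d Hd].
  exists d. split; [apply cond_pos|]. intros s Hs [Hs1 Hs2].
  specialize (Hd (s - tau)). replace (tau + (s - tau)) with s in Hd by ring.
  apply Hd; auto. intros E. rewrite E, Rabs_R0 in Hs1. lra.
Qed.

Lemma has_deriv_on_plus a b f g df dg :
  has_deriv_on a b f df -> has_deriv_on a b g dg ->
  has_deriv_on a b (fun s => f s + g s) (fun s => df s + dg s).
Proof.
  rewrite !has_deriv_on_iff_limit. intros Hf Hg tau Htau.
  refine (limit1_ext _ _ _ _ _ _ (limit_plus _ _ _ _ _ _ (Hf tau Htau) (Hg tau Htau))).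
  intros s [_ Hs]. field. now apply Rminus_eq_contra.
Qed.

Lemma has_deriv_on_mult a b f g df dg :
  has_deriv_on a b f df -> has_deriv_on a b g dg ->
  has_deriv_on a b (fun s => f s * g s) (fun s => df s * g s + f s * dg s).
Proof.
  intros Hf Hg. pose proof (fun tau => has_deriv_on_continuous a b g dg tau Hg) as Hgc.
  rewrite has_deriv_on_iff_limit in Hf, Hg |- *. intros tau Htau.
  refine (limit1_ext _ _ _ _ _ _
            (limit_plus _ _ _ _ _ _ (limit_mul _ _ _ _ _ _ (Hf tau Htau) (Hgc tau Htau))
               (limit_mul _ _ _ _ _ _ (limit_free (fun _ => f tau) _ tau tau) (Hg tau Htau)))).
  intros s [_ Hs]. field. now apply Rminus_eq_contra.
Qed.

Lemma has_deriv_on_rsum a b m (f df : nat -> R -> R) :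
  (forall l, (l < m)%nat -> has_deriv_on a b (f l) (df l)) ->
  has_deriv_on a b (fun s => rsum m (fun l => f l s)) (fun s => rsum m (fun l => df l s)).
Proof.
  induction m as [|m IH]; intros H; simpl.
  - apply derivable_has_deriv_on. intros. apply derivable_pt_lim_const.
  - apply (has_deriv_on_plus a b (fun s => rsum m (fun l => f l s)) (f m)).
    + apply IH. intros; apply H; lia.
    + apply H; lia.
Qed.

Lemma has_deriv_on_reflect a b f df :
  has_deriv_on a b f df ->
  has_deriv_on a b (fun s => f (a + b - s)) (fun s => - df (a + b - s)).
Proof.
  intros H tau Htau eps Heps. destruct (H (a + b - tau) ltac:(lra) eps Heps) as [d [Hd Hs]].
  exists d. split; auto. intros s Hs1 Hs2.
  assert (Hne : s - tau <> 0) by (intros E; rewrite E, Rabs_R0 in Hs2; lra).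
  specialize (Hs (a + b - s) ltac:(lra)).
  replace (a + b - s - (a + b - tau)) with (- (s - tau)) in Hs by ring.
  rewrite Rabs_Ropp in Hs. specialize (Hs Hs2).
  replace ((f (a + b - s) - f (a + b - tau)) / (s - tau) - - df (a + b - tau))
    with (- ((f (a + b - s) - f (a + b - tau)) / - (s - tau) - df (a + b - tau)))
    by (field; auto).
  now rewrite Rabs_Ropp.
Qed.

Lemma has_deriv_on_nondecreasing a b f df : a <= b -> has_deriv_on a b f df ->
  (forall tau, a < tau < b -> 0 <= df tau) -> f a <= f b.
Proof.
  intros Hab Hd Hn. destruct (Rle_lt_or_eq_dec a b Hab) as [Hlt|<-]; [|lra].
  destruct (Rle_or_lt (f a) (f b)) as [|Hgt]; auto. exfalso.
  set (eta := (f a - f b) / 3).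
  destruct (has_deriv_on_continuous a b f df a Hd ltac:(lra) eta ltac:(unfold eta; lra))
    as [da [Hda Ha]].
  destruct (has_deriv_on_continuous a b f df b Hd ltac:(lra) eta ltac:(unfold eta; lra))
    as [db [Hdb Hb]].
  assert (Hh : exists h, 0 < h /\ h < da /\ h < db /\ 2 * h < b - a).
  { exists (Rmin (Rmin da db) ((b - a) / 3) / 2).
    pose proof (Rmin_l (Rmin da db) ((b - a) / 3)). pose proof (Rmin_r (Rmin da db) ((b - a) / 3)).
    pose proof (Rmin_l da db). pose proof (Rmin_r da db).
    assert (0 < Rmin (Rmin da db) ((b - a) / 3)) by (repeat apply Rmin_pos; lra). lra. }
  destruct Hh as [h [Hh [Hha [Hhb Hhab]]]].
  assert (H1 : Rabs (f (a + h) - f a) < eta).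
  { apply Ha. simpl. unfold R_dist. repeat split; try lra. rewrite Rabs_right; lra. }
  assert (H2 : Rabs (f (b - h) - f b) < eta).
  { apply Hb. simpl. unfold R_dist. repeat split; try lra. rewrite Rabs_left; lra. }
  destruct (MVT_cor2 f df (a + h) (b - h) ltac:(lra)) as [c [Hc1 Hc2]].
  { intros c Hc. apply (has_deriv_on_interior a b); auto; lra. }
  assert (0 <= df c * (b - h - (a + h))) by (apply Rmult_le_pos; [apply Hn|]; lra).
  apply Rabs_def2 in H1. apply Rabs_def2 in H2. unfold eta in *. lra.
Qed.

(** * Gordan's alternative *)

Definition wsum {I : Type} (W : list (R * I)) (g : I -> R) : R :=
  fold_right (fun p acc => fst p * g (snd p) + acc) 0 W.

Lemma wsum_ext {I} (W : list (R * I)) g1 g2 :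
  (forall p, In p W -> g1 (snd p) = g2 (snd p)) -> wsum W g1 = wsum W g2.
Proof.
  induction W as [|p W IH]; simpl; intros H; auto.
  rewrite H, IH; auto.
Qed.

Lemma wsum_zero {I} (W : list (R * I)) g : (forall p, In p W -> g (snd p) = 0) -> wsum W g = 0.
Proof.
  induction W as [|p W IH]; simpl; intros H; [lra|].
  rewrite H, IH; auto. ring.
Qed.

Lemma wsum_nonneg {I} (W : list (R * I)) g :
  (forall p, In p W -> 0 <= fst p * g (snd p)) -> 0 <= wsum W g.
Proof.
  induction W as [|p W IH]; simpl; intros H; [lra|].
  pose proof (H p (or_introl eq_refl)). pose proof (IH (fun q Hq => H q (or_intror Hq))). lra.
Qed.

Lemma wsum_ge_term {I} (W : list (R * I)) g p0 :
  (forall p, In p W -> 0 <= fst p * g (snd p)) -> In p0 W -> fst p0 * g (snd p0) <= wsum W g.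
Proof.
  induction W as [|p W IH]; simpl; intros H Hp; [contradiction|].
  pose proof (wsum_nonneg W g (fun q Hq => H q (or_intror Hq))).
  pose proof (H p (or_introl eq_refl)).
  destruct Hp as [<-|Hp]; [lra|]. pose proof (IH (fun q Hq => H q (or_intror Hq)) Hp). lra.
Qed.

Lemma rsum_wsum {I} m (f : nat -> R) (W : list (R * I)) (g : I -> nat -> R) :
  rsum m (fun j => f j * wsum W (fun k => g k j)) = wsum W (fun k => rsum m (fun j => f j * g k j)).
Proof.
  induction W as [|[w k] W IH]; simpl.
  - rewrite (rsum_ext m _ (fun _ => 0)) by (intros; ring). apply rsum_const0.
  - rewrite <- IH, <- rsum_scal_l, <- rsum_plus. apply rsum_ext. intros; ring.
Qed.

Definition strictly_separable {I : Type} (n : nat) (F : nat -> I -> R) (L : list I) : Prop :=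
  exists lam : vec, forall j, In j L -> 0 < rsum n (fun i => lam i * F i j).

Definition null_conic_comb {I : Type} (n : nat) (F : nat -> I -> R) (L : list I) : Prop :=
  exists W : list (R * I), (forall p, In p W -> 0 <= fst p /\ In (snd p) L) /\
    (exists p, In p W /\ 0 < fst p) /\ (forall i, (i < n)%nat -> wsum W (F i) = 0).

Lemma exists_below (Hs : list R) : exists t, forall h, In h Hs -> t < h.
Proof.
  induction Hs as [|h0 Hs [t Ht]]; [exists 0; intros ? []|].
  exists (Rmin t (h0 - 1)). intros h [<-|Hh].
  - pose proof (Rmin_r t (h0 - 1)). lra.
  - pose proof (Rmin_l t (h0 - 1)). pose proof (Ht h Hh). lra.
Qed.

Lemma exists_between (x : R) (Hs : list R) :
  (forall h, In h Hs -> x < h) -> exists t, x < t /\ forall h, In h Hs -> t < h.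
Proof.
  induction Hs as [|h0 Hs IH]; intros Hx; [exists (x + 1); split; [lra|intros ? []]|].
  destruct IH as [t [Hxt Ht]]; [intros; apply Hx; now right|].
  pose proof (Hx h0 (or_introl eq_refl)).
  exists (Rmin t ((x + h0) / 2)). split; [apply Rmin_glb_lt; lra|]. intros h [<-|Hh].
  - pose proof (Rmin_r t ((x + h0) / 2)). lra.
  - pose proof (Rmin_l t ((x + h0) / 2)). pose proof (Ht h Hh). lra.
Qed.

Lemma exists_separating (Ls Hs : list R) :
  (forall l h, In l Ls -> In h Hs -> l < h) ->
  exists t, (forall l, In l Ls -> l < t) /\ (forall h, In h Hs -> t < h).
Proof.
  induction Ls as [|l0 Ls IH]; intros H.
  - destruct (exists_below Hs) as [t Ht]. exists t. split; [intros ? []|auto].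
  - destruct IH as [t0 [Hl Hh]]; [intros; apply H; auto; now right|].
    destruct (Rlt_le_dec l0 t0) as [Hlt|Hge].
    + exists t0. split; auto. intros l [<-|Hin]; auto.
    + destruct (exists_between l0 Hs) as [t [Hl0 Ht]]; [intros; apply H; auto; now left|].
      exists t. split; auto. intros l [<-|Hin]; auto. pose proof (Hl l Hin). lra.
Qed.

Section FourierMotzkin.

Variables (I : Type) (n : nat) (F : nat -> I -> R) (L : list I).

(* One Fourier–Motzkin step eliminates row [n]: the new columns are the zero columns of row [n]
   and the positive combinations of one positive and one negative column that cancel it. *)
Definition fm_cols : list ((I * I) + I) :=
  flat_map (fun p => if Rlt_dec 0 (F n p)
                     then flat_map (fun q => if Rlt_dec (F n q) 0 then [inl (p, q)] else []) L
                     else []) L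
  ++ flat_map (fun z => if Req_EM_T (F n z) 0 then [inr z] else []) L.

Definition fm_entry (g : I -> R) (k : (I * I) + I) : R :=
  match k with inl (p, q) => - F n q * g p + F n p * g q | inr z => g z end.

Lemma In_fm_cols k : In k fm_cols <->
  match k with
  | inl (p, q) => In p L /\ 0 < F n p /\ In q L /\ F n q < 0
  | inr z => In z L /\ F n z = 0
  end.
Proof.
  unfold fm_cols. rewrite in_app_iff, !in_flat_map. split.
  - intros [[p [Hp Hk]]|[z [Hz Hk]]].
    + destruct (Rlt_dec 0 (F n p)); [|contradiction].
      apply in_flat_map in Hk as [q [Hq Hk]].
      destruct (Rlt_dec (F n q) 0); [|contradiction]. destruct Hk as [<-|[]]. tauto.
    + destruct (Req_EM_T (F n z) 0); [|contradiction]. destruct Hk as [<-|[]]. tauto.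
  - destruct k as [[p q]|z].
    + intros (Hp & Hpp & Hq & Hqn). left. exists p. split; auto.
      destruct (Rlt_dec 0 (F n p)); [|contradiction]. apply in_flat_map. exists q. split; auto.
      destruct (Rlt_dec (F n q) 0); [now left|contradiction].
    + intros [Hz Hz0]. right. exists z. split; auto.
      destruct (Req_EM_T (F n z) 0); [now left|contradiction].
Qed.

Lemma fm_lift_solution :
  strictly_separable n (fun i => fm_entry (F i)) fm_cols -> strictly_separable (S n) F L.
Proof.
  intros [lam' Hlam'].
  set (r := fun j => rsum n (fun i => lam' i * F i j)).
  assert (Hr : forall k, In k fm_cols -> 0 < fm_entry r k).
  { intros k Hk. specialize (Hlam' k Hk). destruct k as [[p q]|z]; simpl in *; [|auto].
    unfold r. rewrite <- !rsum_scal_l, <- rsum_plus.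
    erewrite rsum_ext; [exact Hlam'|]. intros; simpl; ring. }
  set (Ls := flat_map (fun p => if Rlt_dec 0 (F n p) then [- r p / F n p] else []) L).
  set (Hs := flat_map (fun q => if Rlt_dec (F n q) 0 then [- r q / F n q] else []) L).
  destruct (exists_separating Ls Hs) as [t [Hlo Hhi]].
  { intros l h Hl Hh. apply in_flat_map in Hl as [p [Hp Hl]]. apply in_flat_map in Hh as [q [Hq Hh]].
    destruct (Rlt_dec 0 (F n p)) as [Hpp|]; [|contradiction].
    destruct (Rlt_dec (F n q) 0) as [Hqn|]; [|contradiction].
    destruct Hl as [<-|[]]. destruct Hh as [<-|[]].
    pose proof (Hr (inl (p, q)) (proj2 (In_fm_cols (inl (p, q))) (conj Hp (conj Hpp (conj Hq Hqn))))).
    simpl in H. enough (0 < - r q / F n q - - r p / F n p) by lra.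
    replace (- r q / F n q - - r p / F n p) with ((- F n q * r p + F n p * r q) / (F n p * - F n q))
      by (field; lra).
    apply Rdiv_lt_0_compat; nra. }
  exists (fun i => if Nat.eqb i n then t else lam' i). intros j Hj. simpl.
  rewrite Nat.eqb_refl, (rsum_ext n _ (fun i => lam' i * F i j)).
  2:{ intros i Hi. replace (Nat.eqb i n) with false; auto. symmetry. apply Nat.eqb_neq. lia. }
  fold (r j). destruct (Rtotal_order (F n j) 0) as [Hneg|[Hzero|Hpos]].
  - assert (Hin : In (- r j / F n j) Hs).
    { apply in_flat_map. exists j. split; auto. destruct (Rlt_dec (F n j) 0); [now left|contradiction]. }
    specialize (Hhi _ Hin). apply (Rmult_lt_gt_compat_neg_l (F n j)) in Hhi; auto.
    replace (F n j * (- r j / F n j)) with (- r j) in Hhi by (field; lra). lra.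
  - rewrite Hzero. pose proof (Hr (inr j) (proj2 (In_fm_cols (inr j)) (conj Hj Hzero))).
    simpl in H. lra.
  - assert (Hin : In (- r j / F n j) Ls).
    { apply in_flat_map. exists j. split; auto. destruct (Rlt_dec 0 (F n j)); [now left|contradiction]. }
    specialize (Hlo _ Hin). apply (Rmult_lt_compat_r (F n j)) in Hlo; auto.
    replace (- r j / F n j * F n j) with (- r j) in Hlo by (field; lra). lra.
Qed.

Definition fm_lift (W : list (R * ((I * I) + I))) : list (R * I) :=
  flat_map (fun wk => match snd wk with
                      | inl (p, q) => [(fst wk * - F n q, p); (fst wk * F n p, q)]
                      | inr z => [(fst wk, z)]
                      end) W.

Lemma wsum_fm_lift W g : wsum (fm_lift W) g = wsum W (fm_entry g).
Proof.
  induction W as [|[w [[p q]|z]] W IH]; simpl; [lra| |]; rewrite <- IH; unfold fm_lift; simpl; ring.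
Qed.

Lemma fm_lift_certificate :
  null_conic_comb n (fun i => fm_entry (F i)) fm_cols -> null_conic_comb (S n) F L.
Proof.
  intros [W [HW [[[w0 k0] [Hk0 Hw0]] Hrows]]].
  exists (fm_lift W). split; [|split].
  - intros p Hp. unfold fm_lift in Hp. apply in_flat_map in Hp as [[w k] [Hwk Hp]].
    destruct (HW _ Hwk) as [Hw Hk]. apply In_fm_cols in Hk. simpl in *.
    destruct k as [[p' q']|z].
    + destruct Hk as (Hp' & Hpp & Hq' & Hqn).
      destruct Hp as [<-|[<-|[]]]; simpl; split; auto; nra.
    + destruct Hp as [<-|[]]; simpl; tauto.
  - destruct (HW _ Hk0) as [_ Hk]. apply In_fm_cols in Hk. simpl in Hw0.
    destruct k0 as [[p q]|z].
    + destruct Hk as (Hp & Hpp & Hq & Hqn).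
      exists (w0 * - F n q, p). split; [|simpl; nra].
      apply in_flat_map. exists (w0, inl (p, q)). simpl. auto.
    + exists (w0, z). split; auto. apply in_flat_map. exists (w0, inr z). simpl. auto.
  - intros i Hi. rewrite wsum_fm_lift. destruct (Nat.eq_dec i n) as [->|Hne].
    + apply wsum_zero. intros [w k] Hwk. destruct (HW _ Hwk) as [_ Hk].
      apply In_fm_cols in Hk. destruct k as [[p q]|z]; simpl in *; [ring|tauto].
    + apply Hrows. lia.
Qed.

End FourierMotzkin.

Theorem gordan_alternative n : forall (I : Type) (F : nat -> I -> R) (L : list I),
  strictly_separable n F L \/ null_conic_comb n F L.
Proof.
  induction n as [|n IH]; intros I F L.
  - destruct L as [|j L].
    + left. exists (fun _ => 0). intros j [].
    + right. exists [(1, j)]. split; [|split].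
      * intros p [<-|[]]. simpl. split; [lra|auto].
      * exists (1, j). simpl. split; [auto|lra].
      * intros i Hi. lia.
  - destruct (IH _ (fun i => fm_entry I n F (F i)) (fm_cols I n F L)) as [Hsol|Hcert].
    + left. now apply fm_lift_solution.
    + right. now apply fm_lift_certificate.
Qed.

Definition orthant_kernel_trivial (n m : nat) (K : mat) : Prop :=
  forall y : vec, vnonneg m y ->
    (forall i, (i < n)%nat -> rsum m (fun j => K i j * y j) = 0) ->
    forall j, (j < m)%nat -> y j = 0.

Theorem gordan n m K :
  (exists lam : vec, forall j, (j < m)%nat -> 0 < vm n lam K j) <-> orthant_kernel_trivial n m K.
Proof.
  split.
  - intros [lam Hlam] y Hy HKy.
    assert (Hsum : rsum m (fun j => vm n lam K j * y j) = 0).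
    { unfold vm. rewrite (rsum_ext m _ (fun j => rsum n (fun i => lam i * (K i j * y j))))
        by (intros; rewrite <- rsum_scal_r; apply rsum_ext; intros; ring).
      rewrite <- rsum_swap, (rsum_ext n _ (fun _ => 0)); [apply rsum_const0|].
      intros i Hi. now rewrite rsum_scal_l, HKy, Rmult_0_r. }
    intros j Hj.
    assert (Hterm : vm n lam K j * y j = 0).
    { apply (rsum_nonneg_eq0 m (fun j => vm n lam K j * y j)); auto. intros k Hk.
      apply Rmult_le_pos; [left; apply Hlam|apply Hy]; auto. }
    pose proof (Hlam j Hj). destruct (Rmult_integral _ _ Hterm); lra.
  - intros Hker. destruct (gordan_alternative n nat K (seq 0 m)) as [[lam Hl]|[W [HW [[p0 [Hp0 Hp0pos]] HK]]]].
    + exists lam. intros j Hj. apply Hl, in_seq. lia.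
    + exfalso.
      set (y := fun j => wsum W (fun k => ident k j)).
      assert (Hind : forall p j, In p W -> 0 <= fst p * ident (snd p) j).
      { intros p j Hp. destruct (HW p Hp) as [Hw _]. unfold ident.
        destruct (Nat.eqb (snd p) j); lra. }
      assert (Hy : vnonneg m y) by (intros j _; apply wsum_nonneg; auto).
      assert (HKy : forall i, (i < n)%nat -> rsum m (fun j => K i j * y j) = 0).
      { intros i Hi. unfold y. rewrite (rsum_wsum m (K i) W (fun k j => ident k j)), <- (HK i Hi).
        apply wsum_ext. intros p Hp. destruct (HW p Hp) as [_ Hin]. apply in_seq in Hin.
        rewrite <- (rsum_ident_r m (snd p) (K i)) by lia. apply rsum_ext. intros; ring. }
      destruct (HW p0 Hp0) as [_ Hin]. apply in_seq in Hin.
      pose proof (Hker y Hy HKy (snd p0) ltac:(lia)) as Hy0.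
      pose proof (wsum_ge_term W (fun k => ident k (snd p0)) p0 (fun p Hp => Hind p _ Hp) Hp0).
      unfold y in Hy0. rewrite Hy0 in H. unfold ident in H. rewrite Nat.eqb_refl in H. lra.
Qed.

(* Conditions (a), (b), (c), (d), (f) and (g) of the theorem, in this order; (e) is
   [orthant_kernel_trivial n (3 * n) (blockK n A M)]. *)

Definition lyap_margins (n : nat) (A J : mat) (Tbar : R) : Prop :=
  exists lam mu nu : vec, vpos n lam /\ vpos n mu /\ vpos n nu /\
    (forall x, vnonneg n x -> dot n lam (mv n A x) <= - dot n mu x) /\
    (forall x theta, vnonneg n x -> Tbar <= theta ->
       dot n lam (mv n J (mv n (mexp n A theta) x)) - dot n lam x <= - dot n nu x).

Definition lyap_dwell (n : nat) (A J : mat) (Tbar : R) : Prop :=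
  exists lam : vec, vpos n lam /\ vneg n (vm n lam A) /\
    (forall theta, Tbar <= theta ->
       vneg n (fun j => vm n lam (mmul n J (mexp n A theta)) j - lam j)).

Definition lyap_min_dwell (n : nat) (A J : mat) (Tbar : R) : Prop :=
  exists lam : vec, vpos n lam /\ vneg n (vm n lam A) /\
    vneg n (fun j => vm n lam (mmul n J (mexp n A Tbar)) j - lam j).

Definition common_linear_lyap (n : nat) (A M : mat) : Prop :=
  exists lam : vec, vpos n lam /\ vneg n (vm n lam A) /\ vneg n (vm n lam M).

Definition clock_lyap (n : nat) (A J : mat) (Tbar : R) : Prop :=
  exists (zeta dzeta : R -> vec) (eps : R),
    vdiff_on n 0 Tbar zeta dzeta /\ vpos n (zeta Tbar) /\ 0 < eps /\
    vneg n (vm n (zeta Tbar) A) /\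
    (forall tau, 0 <= tau <= Tbar -> vnonpos n (fun j => vm n (zeta tau) A j - dzeta tau j)) /\
    vnonpos n (fun j => vm n (zeta Tbar) J j - zeta 0 j + eps).

Definition clock_lyap_rev (n : nat) (A J : mat) (Tbar : R) : Prop :=
  exists (xi dxi : R -> vec) (eps : R),
    vdiff_on n 0 Tbar xi dxi /\ vpos n (xi 0) /\ 0 < eps /\
    vneg n (vm n (xi 0) A) /\
    (forall tau, 0 <= tau <= Tbar -> vnonpos n (fun j => vm n (xi tau) A j + dxi tau j)) /\
    vnonpos n (fun j => vm n (xi 0) J j - xi Tbar j + eps).

Lemma lyap_margins_dwell n A J Tbar : lyap_margins n A J Tbar -> lyap_dwell n A J Tbar.
Proof.
  intros (lam & mu & nu & Hl & Hmu & Hnu & HA & HJ). exists lam. split; [|split]; auto.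
  - intros j Hj. specialize (HA (evec j) (evec_nonneg n j)).
    rewrite dot_mv, !dot_evec in HA by auto. pose proof (Hmu j Hj). lra.
  - intros theta Ht j Hj. specialize (HJ (evec j) theta (evec_nonneg n j) Ht).
    rewrite dot_mv_mv, !dot_evec in HJ by auto. pose proof (Hnu j Hj). lra.
Qed.

Lemma lyap_dwell_min_dwell n A J Tbar : lyap_dwell n A J Tbar -> lyap_min_dwell n A J Tbar.
Proof. intros (lam & Hl & HA & HJ). exists lam. repeat split; auto. apply HJ. lra. Qed.

Lemma vm_mmul_mexp_plus n A J lam T s j : 0 <= s -> (j < n)%nat ->
  vm n lam (mmul n J (mexp n A (T + s))) j = vm n (vm n lam (mmul n J (mexp n A T))) (mexp n A s) j.
Proof.
  intros Hs Hj. rewrite <- vm_mmul. apply rsum_ext. intros i Hi. f_equal.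
  rewrite mmul_assoc. apply rsum_ext. intros k Hk. f_equal. now apply mexp_plus.
Qed.

(* The contraction factor [1 - c] survives any extra dwell time because [lam^T A <= 0]. *)
Lemma lyap_min_dwell_contraction n A J Tbar : Metzler n A -> lyap_min_dwell n A J Tbar ->
  exists lam c, vpos n lam /\ 0 < c <= 1 /\ vneg n (vm n lam A) /\
    forall theta, Tbar <= theta -> forall j, (j < n)%nat ->
      vm n lam (mmul n J (mexp n A theta)) j <= (1 - c) * lam j.
Proof.
  intros HA (lam & Hl & HlA & HJ).
  destruct (finite_contraction_factor n lam (vm n lam (mmul n J (mexp n A Tbar))) Hl)
    as [c [Hc Hw]]; [intros j Hj; pose proof (HJ j Hj); simpl in *; lra|].
  exists lam, c. repeat split; auto; try lra.
  intros theta Ht j Hj. replace theta with (Tbar + (theta - Tbar)) by ring.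
  rewrite vm_mmul_mexp_plus by (auto; lra).
  apply Rle_trans with (vm n (fun i => (1 - c) * lam i) (mexp n A (theta - Tbar)) j).
  - apply vm_le; auto. apply mexp_nonneg; auto; lra.
  - rewrite vm_scal. apply Rmult_le_compat_l; [lra|].
    apply vm_mexp_le; auto; [|lra]. intros i Hi. pose proof (HlA i Hi). lra.
Qed.

Lemma lyap_min_dwell_margins n A J Tbar : Metzler n A ->
  lyap_min_dwell n A J Tbar -> lyap_margins n A J Tbar.
Proof.
  intros HA Hc. destruct (lyap_min_dwell_contraction n A J Tbar HA Hc)
    as (lam & c & Hl & Hc01 & HlA & Hcontr).
  exists lam, (fun j => - vm n lam A j), (fun j => c * lam j).
  split; [auto|split; [intros j Hj; pose proof (HlA j Hj); lra|]].
  split; [intros j Hj; pose proof (Hl j Hj); nra|split].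
  - intros x Hx. rewrite dot_mv. unfold dot.
    rewrite (rsum_ext n (fun i => - vm n lam A i * x i) (fun i => -1 * (vm n lam A i * x i)))
      by (intros; ring).
    rewrite rsum_scal_l. lra.
  - intros x theta Hx Ht. rewrite dot_mv_mv.
    assert (dot n (vm n lam (mmul n J (mexp n A theta))) x <= dot n (fun j => (1 - c) * lam j) x)
      by (apply dot_le_l; auto; intros; now apply Hcontr).
    enough (dot n (fun j => (1 - c) * lam j) x = dot n lam x - dot n (fun j => c * lam j) x) by lra.
    unfold dot. rewrite <- rsum_minus. apply rsum_ext. intros; ring.
Qed.

Lemma lyap_min_dwell_iff_common n A J Tbar :
  lyap_min_dwell n A J Tbar <-> common_linear_lyap n A (msub (mmul n J (mexp n A Tbar)) ident).
Proof.
  split; intros (lam & Hl & HA & HJ); exists lam; repeat split; auto;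
    intros j Hj; specialize (HJ j Hj); simpl in *; rewrite ?vm_msub_ident in * by auto; auto.
Qed.

Lemma vm_blockK n A M lam j :
  vm n lam (blockK n A M) j =
  if Nat.ltb j n then vm n lam ident j
  else if Nat.ltb j (2 * n) then - vm n lam A (j - n)%nat
  else - vm n lam M (j - 2 * n)%nat.
Proof.
  unfold vm, blockK.
  destruct (Nat.ltb j n); [reflexivity|].
  destruct (Nat.ltb j (2 * n)); rewrite <- rsum_opp; apply rsum_ext; intros; ring.
Qed.

Lemma common_linear_lyap_iff_kernel n A M :
  common_linear_lyap n A M <-> orthant_kernel_trivial n (3 * n) (blockK n A M).
Proof.
  rewrite <- gordan. split.
  - intros (lam & Hl & HA & HM). exists lam. intros j Hj. rewrite vm_blockK.
    destruct (Nat.ltb_spec j n); [rewrite vm_ident by auto; auto|].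
    destruct (Nat.ltb_spec j (2 * n)).
    + pose proof (HA (j - n)%nat ltac:(lia)). lra.
    + pose proof (HM (j - 2 * n)%nat ltac:(lia)). lra.
  - intros [lam Hlam]. exists lam. split; [|split]; intros j Hj.
    + specialize (Hlam j ltac:(lia)). rewrite vm_blockK in Hlam.
      destruct (Nat.ltb_spec j n); [|lia]. now rewrite vm_ident in Hlam.
    + specialize (Hlam (n + j)%nat ltac:(lia)). rewrite vm_blockK in Hlam.
      destruct (Nat.ltb_spec (n + j) n); [lia|]. destruct (Nat.ltb_spec (n + j) (2 * n)); [|lia].
      replace (n + j - n)%nat with j in Hlam by lia. lra.
    + specialize (Hlam (2 * n + j)%nat ltac:(lia)). rewrite vm_blockK in Hlam.
      destruct (Nat.ltb_spec (2 * n + j) n); [lia|]. destruct (Nat.ltb_spec (2 * n + j) (2 * n)); [lia|].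
      replace (2 * n + j - 2 * n)%nat with j in Hlam by lia. lra.
Qed.

Lemma clock_lyap_iff_rev n A J Tbar : clock_lyap n A J Tbar <-> clock_lyap_rev n A J Tbar.
Proof.
  split.
  - intros (z & dz & eps & Hd & Hpos & Heps & HzA & Hmid & Hend).
    exists (fun s => z (0 + Tbar - s)), (fun s i => - dz (0 + Tbar - s) i), eps.
    replace (0 + Tbar - 0) with Tbar by ring. replace (0 + Tbar - Tbar) with 0 by ring.
    repeat split; auto.
    + intros i Hi. apply (has_deriv_on_reflect 0 Tbar (fun s => z s i) (fun s => dz s i)), Hd, Hi.
    + intros tau Htau j Hj. pose proof (Hmid (0 + Tbar - tau) ltac:(lra) j Hj). simpl in *. lra.
  - intros (x & dx & eps & Hd & Hpos & Heps & HxA & Hmid & Hend).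
    exists (fun s => x (0 + Tbar - s)), (fun s i => - dx (0 + Tbar - s) i), eps.
    replace (0 + Tbar - 0) with Tbar by ring. replace (0 + Tbar - Tbar) with 0 by ring.
    repeat split; auto.
    + intros i Hi. apply (has_deriv_on_reflect 0 Tbar (fun s => x s i) (fun s => dx s i)), Hd, Hi.
    + intros tau Htau j Hj. pose proof (Hmid (0 + Tbar - tau) ltac:(lra) j Hj). simpl in *. lra.
Qed.

(* [tau |-> zeta(tau)^T e^{A (T - tau)}] is nondecreasing when [dzeta >= zeta^T A]. *)
Lemma supersolution_mexp_le n A T (zeta dzeta : R -> vec) j : Metzler n A -> 0 <= T ->
  vdiff_on n 0 T zeta dzeta ->
  (forall tau, 0 <= tau <= T -> vnonpos n (fun i => vm n (zeta tau) A i - dzeta tau i)) ->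
  (j < n)%nat -> vm n (zeta 0) (mexp n A T) j <= zeta T j.
Proof.
  intros HA HT Hd Hsup Hj.
  enough (Hmono : vm n (zeta 0) (mexp n A (T - 0)) j <= vm n (zeta T) (mexp n A (T - T)) j)
    by now rewrite Rminus_0_r, Rminus_diag, vm_mexp_0 in Hmono.
  apply (has_deriv_on_nondecreasing 0 T (fun tau => vm n (zeta tau) (mexp n A (T - tau)) j)
           (fun tau => rsum n (fun i => dzeta tau i * mexp n A (T - tau) i j +
                                         zeta tau i * - mmul n A (mexp n A (T - tau)) i j)) HT).
  - apply (has_deriv_on_rsum 0 T n (fun i tau => zeta tau i * mexp n A (T - tau) i j)).
    intros i Hi. apply (has_deriv_on_mult 0 T (fun tau => zeta tau i)); [now apply Hd|].
    apply derivable_has_deriv_on. intros tau _.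
    apply (derivable_pt_lim_reflect (fun s => mexp n A s i j)), mexp_derive_l.
  - intros tau Htau.
    replace (rsum n _) with (vm n (fun i => dzeta tau i - vm n (zeta tau) A i) (mexp n A (T - tau)) j).
    + apply vm_nonneg; auto; [apply mexp_nonneg; auto; lra|].
      intros i Hi. pose proof (Hsup tau ltac:(lra) i Hi). simpl in *. lra.
    + rewrite vm_minus, <- vm_mmul. unfold vm. rewrite <- rsum_minus. apply rsum_ext. intros; ring.
Qed.

Lemma clock_lyap_min_dwell n A J Tbar : Metzler n A -> 0 <= Tbar ->
  clock_lyap n A J Tbar -> lyap_min_dwell n A J Tbar.
Proof.
  intros HA HT (z & dz & eps & Hd & Hpos & Heps & HzA & Hsup & Hend).
  exists (z Tbar). repeat split; auto. intros j Hj. simpl. rewrite vm_mmul.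
  pose proof (mexp_nonneg n A Tbar HA HT) as HE.
  assert (Hjump : vm n (vm n (z Tbar) J) (mexp n A Tbar) j
                  <= vm n (fun i => - eps * 1 + z 0 i) (mexp n A Tbar) j).
  { apply vm_le; auto. intros i Hi. pose proof (Hend i Hi). simpl in *. lra. }
  rewrite vm_lin in Hjump.
  pose proof (vm_pos_diag n (fun _ => 1) (mexp n A Tbar) j HE (fun _ _ => Rle_0_1) Hj Rlt_0_1
                (mexp_diag_pos n A Tbar j HA HT Hj)).
  pose proof (supersolution_mexp_le n A Tbar z dz j HA HT Hd Hsup Hj). nra.
Qed.

(* The certificate is [zeta(tau) = w^T e^{A tau} + e^{K (tau - Tbar)} g^T] with
   [w = J^T lam + eps 1] and [g = lam - e^{A Tbar}^T w > 0]; [K] dominates [g^T A] by [g]. *)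
Lemma lyap_min_dwell_clock_lyap n A J Tbar : lyap_min_dwell n A J Tbar -> clock_lyap n A J Tbar.
Proof.
  intros (lam & Hl & HlA & HJ).
  destruct (vm_slack n (vm n lam J) lam (mexp n A Tbar)) as [eps [Heps Hg]].
  { intros j Hj. pose proof (HJ j Hj). simpl in *. rewrite vm_mmul in *. lra. }
  set (w := fun i => vm n lam J i + eps) in *.
  set (g := fun j => lam j - vm n w (mexp n A Tbar) j).
  assert (Hgpos : forall j, (j < n)%nat -> 0 < g j) by (intros j Hj; specialize (Hg j Hj); unfold g; lra).
  destruct (finite_ratio_bound n g (vm n g A) Hgpos) as [K HK].
  set (e := fun s => exp (K * (s - Tbar))).
  assert (He : forall s, derivable_pt_lim e s (e s * K)).
  { intros s. apply is_derive_Reals. unfold e. auto_derive; [auto|unfold Rminus; ring]. }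
  set (zeta := fun s j => vm n w (mexp n A s) j + e s * g j).
  assert (HzT : forall j, (j < n)%nat -> zeta Tbar j = lam j).
  { intros j Hj. unfold zeta, e, g. rewrite Rminus_diag, Rmult_0_r, exp_0. ring. }
  exists zeta, (fun s j => vm n (vm n w (mexp n A s)) A j + e s * K * g j), eps.
  repeat split; auto.
  - intros i Hi. apply derivable_has_deriv_on. intros tau _.
    apply (derivable_pt_lim_plus (fun s => vm n w (mexp n A s) i)); [now apply vm_mexp_derive_r|].
    apply (derivable_pt_lim_scal_right e), He.
  - intros j Hj. rewrite HzT; auto.
  - intros j Hj. rewrite (vm_ext n _ lam); auto.
  - intros tau _ j Hj. unfold zeta.
    rewrite (vm_ext n _ (fun i => e tau * g i + vm n w (mexp n A tau) i)) by (intros; ring).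
    rewrite vm_lin. pose proof (HK j Hj). pose proof (exp_pos (K * (tau - Tbar))). fold (e tau) in H0.
    simpl. nra.
  - intros j Hj. simpl. rewrite (vm_ext n (zeta Tbar) lam) by auto.
    unfold zeta. rewrite vm_mexp_0 by auto. unfold w.
    pose proof (exp_pos (K * (0 - Tbar))). pose proof (Hgpos j Hj). fold (e 0) in H. nra.
Qed.

(** * Stability under a minimum dwell time *)

Definition absv (y : vec) : vec := fun i => Rabs (y i).

Definition wnorm (n : nat) (lam y : vec) : R := dot n lam (absv y).

Lemma abs_mv n M y i : nonneg_mat n M -> (i < n)%nat -> Rabs (mv n M y i) <= mv n M (absv y) i.
Proof.
  intros HM Hi. eapply Rle_trans; [apply rsum_abs|]. apply rsum_le. intros j Hj.
  rewrite Rabs_mult, (Rabs_right (M i j)); [apply Rle_refl|]. apply Rle_ge, HM; auto.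
Qed.

Lemma wnorm_ext n lam x y : (forall i, (i < n)%nat -> x i = y i) -> wnorm n lam x = wnorm n lam y.
Proof. intros H. apply rsum_ext. intros i Hi. unfold absv. now rewrite H. Qed.

Lemma wnorm_nonneg n lam y : vpos n lam -> 0 <= wnorm n lam y.
Proof.
  intros Hl. apply rsum_nonneg. intros i Hi. apply Rmult_le_pos; [left; auto|apply Rabs_pos].
Qed.

Lemma wnorm_equiv n lam : vpos n lam ->
  exists lo hi, 0 < lo /\ 0 < hi /\ forall y, lo * vnorm n y <= wnorm n lam y <= hi * vnorm n y.
Proof.
  intros Hl. destruct (finite_pos_lower_bound n lam Hl) as [lo [Hlo Hloi]].
  set (hi := 1 + rsum n lam).
  assert (Hhi : forall i, (i < n)%nat -> lam i <= hi).
  { intros i Hi. pose proof (rsum_ge_term n lam i (fun i Hi => Rlt_le _ _ (Hl i Hi)) Hi).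
    unfold hi. lra. }
  assert (0 < hi) by (unfold hi; pose proof (rsum_nonneg n lam (fun i Hi => Rlt_le _ _ (Hl i Hi))); lra).
  exists lo, hi. split; [auto|split; [auto|]].
  intros y. unfold vnorm, wnorm, dot, absv. rewrite <- !rsum_scal_l.
    split; apply rsum_le; intros i Hi; apply Rmult_le_compat_r; auto using Rabs_pos.
Qed.

Lemma incr_seq_le (t : nat -> R) : (forall k, t k < t (S k)) -> forall i j, (i <= j)%nat -> t i <= t j.
Proof. intros H i j Hij. induction Hij as [|j Hij IH]; [lra|]. pose proof (H j). lra. Qed.

Lemma impulse_interval (t : nat -> R) tau : (forall k, t k < t (S k)) -> cv_infty t ->
  t O < tau -> exists k, t k < tau <= t (S k).
Proof.
  intros Hinc Hinf H0. destruct (Hinf tau) as [N HN]. specialize (HN N (le_n N)).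
  assert (HtN : tau <= t N) by lra. clear HN. induction N as [|N IH]; [lra|].
  destruct (Rle_or_lt tau (t N)); [now apply IH|]. exists N. split; auto.
Qed.

Section Stability.

Variables (n : nat) (A J : mat) (Tbar : R) (lam : vec) (c : R).
Hypotheses (HA : Metzler n A) (HJ : nonneg_mat n J) (Hlam : vpos n lam) (Hc : 0 < c <= 1)
  (HlamA : vneg n (vm n lam A))
  (Hcontr : forall theta, Tbar <= theta -> forall j, (j < n)%nat ->
     vm n lam (mmul n J (mexp n A theta)) j <= (1 - c) * lam j).

Lemma wnorm_flow z s : 0 <= s -> wnorm n lam (mv n (mexp n A s) z) <= wnorm n lam z.
Proof.
  intros Hs. pose proof (mexp_nonneg n A s HA Hs) as HE.
  apply Rle_trans with (dot n lam (mv n (mexp n A s) (absv z))).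
  - apply dot_le_r; [intros i Hi; left; auto|]. intros i Hi. now apply abs_mv.
  - rewrite dot_mv. apply dot_le_l; [intros i _; apply Rabs_pos|].
    intros i Hi. apply vm_mexp_le; auto. intros j Hj. pose proof (HlamA j Hj). lra.
Qed.

Lemma wnorm_jump z s : 0 <= s -> Tbar <= s ->
  wnorm n lam (mv n J (mv n (mexp n A s) z)) <= (1 - c) * wnorm n lam z.
Proof.
  intros Hs HTs. pose proof (mexp_nonneg n A s HA Hs) as HE.
  apply Rle_trans with (dot n lam (mv n J (mv n (mexp n A s) (absv z)))).
  - apply dot_le_r; [intros i Hi; left; auto|]. intros i Hi.
    eapply Rle_trans; [now apply abs_mv|]. apply mv_le; auto. intros j Hj. now apply abs_mv.
  - rewrite dot_mv_mv. unfold wnorm, dot. rewrite <- rsum_scal_l. apply rsum_le. intros i Hi.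
    rewrite <- Rmult_assoc. apply Rmult_le_compat_r; [apply Rabs_pos|]. now apply Hcontr.
Qed.

Section Solution.

Variables (t : nat -> R) (x0 : vec) (x : R -> vec).
Hypotheses (Ht : admissible Tbar t) (Hsol : is_solution n A J t x0 x).

Let impulse_state (k : nat) : vec := match k with O => x0 | S _ => mv n J (x (t k)) end.

Lemma wnorm_impulse_state k : wnorm n lam (impulse_state k) <= (1 - c) ^ k * wnorm n lam x0.
Proof.
  destruct Ht as [Hinc [_ Hdw]]. destruct Hsol as [_ Hx].
  induction k as [|k IH]; [simpl; lra|].
  apply Rle_trans with ((1 - c) * wnorm n lam (impulse_state k)).
  - replace (wnorm n lam (impulse_state (S k)))
      with (wnorm n lam (mv n J (mv n (mexp n A (t (S k) - t k)) (impulse_state k)))).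
    + apply wnorm_jump; auto. pose proof (Hinc k). lra.
    + apply wnorm_ext. intros i Hi. apply rsum_ext. intros j Hj. f_equal. symmetry.
      rewrite (Hx k (t (S k)) (conj (Hinc k) (Rle_refl _)) j Hj). now destruct k.
  - simpl. rewrite Rmult_assoc. apply Rmult_le_compat_l; [lra|auto].
Qed.

Lemma wnorm_solution_piece k tau : t k < tau <= t (S k) ->
  wnorm n lam (x tau) <= (1 - c) ^ k * wnorm n lam x0.
Proof.
  intros Htau. destruct Hsol as [_ Hx].
  rewrite (wnorm_ext n lam (x tau) (mv n (mexp n A (tau - t k)) (impulse_state k)))
    by (intros i Hi; rewrite (Hx k tau Htau i Hi); now destruct k).
  eapply Rle_trans; [apply wnorm_flow; lra|apply wnorm_impulse_state].
Qed.

Lemma wnorm_solution_tail K tau : t K < tau -> wnorm n lam (x tau) <= (1 - c) ^ K * wnorm n lam x0.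
Proof.
  intros HK. destruct Ht as [Hinc [Hinf _]].
  destruct (impulse_interval t tau Hinc Hinf) as [k Hk];
    [pose proof (incr_seq_le t Hinc O K ltac:(lia)); lra|].
  assert (HKk : (K <= k)%nat).
  { destruct (Nat.le_gt_cases K k); auto. pose proof (incr_seq_le t Hinc (S k) K ltac:(lia)). lra. }
  eapply Rle_trans; [now apply (wnorm_solution_piece k)|].
  apply Rmult_le_compat_r; [now apply wnorm_nonneg|].
  replace k with (K + (k - K))%nat by lia. rewrite pow_add.
  pose proof (pow_le (1 - c) K ltac:(lra)). pose proof (pow_le (1 - c) (k - K) ltac:(lra)).
  pose proof (pow_incr (1 - c) 1 (k - K) ltac:(lra)) as Hp. rewrite pow1 in Hp. nra.
Qed.

End Solution.

Lemma contraction_GAS t : admissible Tbar t -> GAS_seq n A J t.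
Proof.
  intros Ht. destruct (wnorm_equiv n lam Hlam) as (lo & hi & Hlo & Hhi & Heq).
  assert (Hbound : forall x0 x, is_solution n A J t x0 x -> forall tau, t O <= tau ->
                     wnorm n lam (x tau) <= wnorm n lam x0).
  { intros x0 x Hs tau Htau. destruct (Req_dec tau (t O)) as [->|Hne].
    - right. apply wnorm_ext, Hs.
    - pose proof (wnorm_solution_tail t x0 x Ht Hs O tau ltac:(lra)). simpl in H. lra. }
  split.
  - intros eps Heps. exists (eps * lo / hi). split; [apply Rdiv_lt_0_compat; nra|].
    intros x0 x Hs Hx0 tau Htau.
    pose proof (Hbound x0 x Hs tau Htau). destruct (Heq (x tau)), (Heq x0).
    assert (hi * vnorm n x0 < eps * lo).
    { apply Rmult_lt_compat_l with (r := hi) in Hx0; auto.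
      now replace (hi * (eps * lo / hi)) with (eps * lo) in Hx0 by (field; lra). }
    apply (Rmult_lt_reg_l lo); [auto|lra].
  - intros x0 x Hs eps Heps. set (V0 := wnorm n lam x0).
    pose proof (wnorm_nonneg n lam x0 Hlam). fold V0 in H.
    destruct (pow_lt_1_zero (1 - c) ltac:(rewrite Rabs_right; lra) (eps * lo / (V0 + 1)))
      as [K HK]; [apply Rdiv_lt_0_compat; nra|].
    specialize (HK K (le_n K)). rewrite Rabs_right in HK by (apply Rle_ge, pow_le; lra).
    exists (t K + 1). intros tau Htau.
    pose proof (wnorm_solution_tail t x0 x Ht Hs K tau ltac:(lra)) as Htail. fold V0 in Htail.
    destruct (Heq (x tau)).
    assert ((1 - c) ^ K * V0 < eps * lo).
    { apply Rle_lt_trans with (eps * lo / (V0 + 1) * V0); [apply Rmult_le_compat_r; lra|].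
      replace (eps * lo / (V0 + 1) * V0) with (eps * lo - eps * lo / (V0 + 1)) by (field; lra).
      enough (0 < eps * lo / (V0 + 1)) by lra. apply Rdiv_lt_0_compat; nra. }
    apply (Rmult_lt_reg_l lo); [auto|lra].
Qed.

End Stability.

Lemma lyap_min_dwell_stable n A J Tbar : Metzler n A -> nonneg_mat n J ->
  lyap_min_dwell n A J Tbar -> AS_min_dwell n A J Tbar.
Proof.
  intros HA HJ Hc t Ht.
  destruct (lyap_min_dwell_contraction n A J Tbar HA Hc) as (lam & c & Hl & Hc01 & HlA & Hcontr).
  now apply (contraction_GAS n A J Tbar lam c).
Qed.

Theorem theorem3 (n : nat) (A J : mat) (Tbar : R)
  (HA : Metzler n A) (HJ : nonneg_mat n J) (HT : 0 < Tbar) :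
  let Pa := exists lam mu nu : vec, vpos n lam /\ vpos n mu /\ vpos n nu /\
        (forall x, vnonneg n x -> dot n lam (mv n A x) <= - dot n mu x) /\
        (forall x theta, vnonneg n x -> Tbar <= theta ->
           dot n lam (mv n J (mv n (mexp n A theta) x)) - dot n lam x
             <= - dot n nu x) in
  let Pb := exists lam : vec, vpos n lam /\ vneg n (vm n lam A) /\
        (forall theta, Tbar <= theta ->
           vneg n (fun j => vm n lam (mmul n J (mexp n A theta)) j - lam j)) in
  let Pc := exists lam : vec, vpos n lam /\ vneg n (vm n lam A) /\
        vneg n (fun j => vm n lam (mmul n J (mexp n A Tbar)) j - lam j) in
  let Pd := exists lam : vec, vpos n lam /\ vneg n (vm n lam A) /\
        vneg n (vm n lam (msub (mmul n J (mexp n A Tbar)) ident)) in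
  let Pe := forall y : vec, vnonneg (3 * n) y ->
        (forall i, (i < n)%nat ->
           rsum (3 * n) (fun j =>
             blockK n A (msub (mmul n J (mexp n A Tbar)) ident) i j * y j) = 0) ->
        forall j, (j < 3 * n)%nat -> y j = 0 in
  let Pf := exists (zeta dzeta : R -> vec) (eps : R),
        vdiff_on n 0 Tbar zeta dzeta /\ vpos n (zeta Tbar) /\ 0 < eps /\
        vneg n (vm n (zeta Tbar) A) /\
        (forall tau, 0 <= tau <= Tbar ->
           vnonpos n (fun j => vm n (zeta tau) A j - dzeta tau j)) /\
        vnonpos n (fun j => vm n (zeta Tbar) J j - zeta 0 j + eps) in
  let Pg := exists (xi dxi : R -> vec) (eps : R),
        vdiff_on n 0 Tbar xi dxi /\ vpos n (xi 0) /\ 0 < eps /\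
        vneg n (vm n (xi 0) A) /\
        (forall tau, 0 <= tau <= Tbar ->
           vnonpos n (fun j => vm n (xi tau) A j + dxi tau j)) /\
        vnonpos n (fun j => vm n (xi 0) J j - xi Tbar j + eps) in
  (Pa <-> Pb) /\ (Pa <-> Pc) /\ (Pa <-> Pd) /\ (Pa <-> Pe) /\
  (Pa <-> Pf) /\ (Pa <-> Pg) /\ (Pa -> AS_min_dwell n A J Tbar).
Proof.
  cbv zeta.
  assert (Hab : lyap_margins n A J Tbar <-> lyap_dwell n A J Tbar).
  { split; [apply lyap_margins_dwell|].
    intros Hb. now apply lyap_min_dwell_margins, lyap_dwell_min_dwell. }
  assert (Hac : lyap_margins n A J Tbar <-> lyap_min_dwell n A J Tbar).
  { rewrite Hab. split; [apply lyap_dwell_min_dwell|].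
    intros Hc. now apply lyap_margins_dwell, lyap_min_dwell_margins. }
  assert (Had : lyap_margins n A J Tbar <->
                common_linear_lyap n A (msub (mmul n J (mexp n A Tbar)) ident))
    by (rewrite Hac; apply lyap_min_dwell_iff_common).
  assert (Hae : lyap_margins n A J Tbar <->
                orthant_kernel_trivial n (3 * n) (blockK n A (msub (mmul n J (mexp n A Tbar)) ident)))
    by (rewrite Had; apply common_linear_lyap_iff_kernel).
  assert (Haf : lyap_margins n A J Tbar <-> clock_lyap n A J Tbar).
  { rewrite Hac. split; [apply lyap_min_dwell_clock_lyap|apply clock_lyap_min_dwell; auto; lra]. }
  assert (Hag : lyap_margins n A J Tbar <-> clock_lyap_rev n A J Tbar)
    by (rewrite Haf; apply clock_lyap_iff_rev).
  assert (Has : lyap_margins n A J Tbar -> AS_min_dwell n A J Tbar)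
    by (intros Ha; apply lyap_min_dwell_stable, Hac; auto).
  exact (conj Hab (conj Hac (conj Had (conj Hae (conj Haf (conj Hag Has)))))).
Qed.
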